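(* Let $\{a_n\}_{n\ge1}$ be complex numbers with $\sum_{n=1}^\infty|a_n|^2(\log n)^3<\infty$, and for $t\in[0,1]$ let $f_t(z)=\sum_{n=1}^\infty r_n(t)a_nz^n$ ($z\in\mathbb D$). Then for almost every $t\in[0,1]$, $$\int_0^1(1-r)\left(\log\frac{1}{1-r}\right)^2\left[M_\infty(r,f_t')\right]^2\,dr<\infty.$$
   Context: $\mathbb D$ is the open unit disc and $M_\infty(r,f)=\max_{|z|=r}|f(z)|$. The Rademacher functions are $r_0(t)=1$ on $(0,1/2)$, $-1$ on $(1/2,1)$, $0$ at $t=0,1/2,1$, and $r_n(t)=r_0(2^nt)$ (extended 1-periodically) for $n\ge1$. *)

From Stdlib Require Import Reals Lra.
Open Scope R_scope.

Definition Cx := (R * R)%type.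
Definition Cadd (z w : Cx) : Cx := (fst z + fst w, snd z + snd w).
Definition Cmul (z w : Cx) : Cx :=
  (fst z * fst w - snd z * snd w, fst z * snd w + snd z * fst w).
Definition Cscale (c : R) (z : Cx) : Cx := (c * fst z, c * snd z).
Definition C1 : Cx := (1, 0).
Fixpoint Cpow (z : Cx) (n : nat) : Cx :=
  match n with O => C1 | S m => Cmul z (Cpow z m) end.
Definition Cnorm (z : Cx) : R := sqrt (fst z ^ 2 + snd z ^ 2).

Definition Csum_to (u : nat -> Cx) (w : Cx) : Prop :=
  Un_cv (fun N => sum_f_R0 (fun k => fst (u k)) N) (fst w) /\
  Un_cv (fun N => sum_f_R0 (fun k => snd (u k)) N) (snd w).

Definition rad0 (t : R) : R :=
  let u := frac_part t in
  if Req_EM_T u 0 then 0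
  else if Rlt_dec u (1/2) then 1
  else if Req_EM_T u (1/2) then 0
  else -1.
Definition rad (n : nat) (t : R) : R := rad0 (2 ^ n * t).

(* f_t(z) = sum_{n>=1} r_n(t) a_n z^n, so
   f_t'(z) = sum_{n>=1} n r_n(t) a_n z^(n-1); the k-th term (k>=0) is for n = k+1. *)
Definition fderiv_term (a : nat -> Cx) (t : R) (z : Cx) (k : nat) : Cx :=
  Cmul (Cscale (INR (S k) * rad (S k) t) (a (S k))) (Cpow z k).

(* the set { |f_t'(z)| : |z| = r } ; M_infty(r, f_t') is its supremum *)
Definition modset (a : nat -> Cx) (t r : R) : R -> Prop :=
  fun m => exists z w, Cnorm z = r /\ Csum_to (fderiv_term a t z) w /\ m = Cnorm w.

(* int_0^1 (1-r) (log 1/(1-r))^2 [M_infty(r,f_t')]^2 dr < infinity,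
   as an improper Riemann integral of a nonnegative continuous integrand on [0,1) *)
Definition finite_weighted_integral (a : nat -> Cx) (t : R) : Prop :=
  exists M : R -> R,
    (forall r, 0 <= r < 1 -> is_lub (modset a t r) (M r)) /\
    exists B : R, forall s, 0 <= s < 1 ->
      exists pr : Riemann_integrable
                    (fun r => (1 - r) * (ln (1 / (1 - r))) ^ 2 * (M r) ^ 2) 0 s,
        RiemannInt pr <= B.

Definition null_set (E : R -> Prop) : Prop :=
  forall eps, 0 < eps ->
    exists lo hi : nat -> R,
      (forall k, lo k <= hi k) /\
      (forall x, E x -> exists k, lo k < x < hi k) /\
      (forall N, sum_f_R0 (fun k => hi k - lo k) N <= eps).

(* Split f_t' into the dyadic blocks
     Q_j(t, z) = sum_{2^j <= n < 2^(j+1)} n r_n(t) a_n z^(n - 2^j),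
   so that f_t'(z) = sum_j z^(2^j - 1) Q_j(t, z).  On each dyadic interval of length
   2^(-2^(j+1)) the signs r_n(t) of block j form a fixed pattern, and the patterns of
   the 2^(2^(j+1)) intervals run through all sign choices.  A Chernoff bound at the
   points of a grid of mesh 8^(-j) in the closed disc, together with the Lipschitz
   continuity of Q_j, gives sup_{|z| <= 1} |Q_j(t, z)| <= C sqrt(j V_j), with
   V_j ~ sum_{block j} (n |a_n|)^2, except on intervals of total length O(4^(-j)).
   So outside a set of measure O(2^(-J)) this holds for every j >= J.  For such t,
   M_oo(r, f_t') <= sum_j b_j r^(2^j - 1), b_j the bound for block j; on the annulus 1 - 2^(-k) <= r <= 1 - 2^(-k-1)
   a weighted Cauchy-Schwarz inequality bounds the integral by a sequence whose sum
   is controlled by sum_j j^3 4^(-j) V_j, which is O(sum_n |a_n|^2 (log n)^3).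
   Dyadic t are harmless: then r_n(t) = 0 for all large n. *)

From Stdlib Require Import Reals Lra Lia ZArith ClassicalEpsilon.
From Coquelicot Require Import Coquelicot.
Open Scope R_scope.

(* [rsum f n] and [rprod f n] range over the first [n] terms, unlike [sum_f_R0]. *)
Fixpoint rsum (f : nat -> R) (n : nat) : R :=
  match n with O => 0 | S m => rsum f m + f m end.
Fixpoint rprod (f : nat -> R) (n : nat) : R :=
  match n with O => 1 | S m => rprod f m * f m end.

Lemma sum_f_R0_rsum f N : sum_f_R0 f N = rsum f (S N).
Proof. induction N; simpl; [ring|rewrite IHN; simpl; ring]. Qed.

Lemma rsum_ext f g n : (forall i, (i < n)%nat -> f i = g i) -> rsum f n = rsum g n.
Proof.
  induction n; simpl; intros H; auto.
  rewrite IHn by (intros; apply H; lia). rewrite H by lia; auto.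
Qed.

Lemma rsum_le f g n : (forall i, (i < n)%nat -> f i <= g i) -> rsum f n <= rsum g n.
Proof.
  induction n; simpl; intros H; [lra|].
  assert (f n <= g n) by (apply H; lia).
  assert (rsum f n <= rsum g n) by (apply IHn; intros; apply H; lia). lra.
Qed.

Lemma rsum_plus f g n : rsum (fun i => f i + g i) n = rsum f n + rsum g n.
Proof. induction n; simpl; lra. Qed.

Lemma rsum_scal c f n : rsum (fun i => c * f i) n = c * rsum f n.
Proof. induction n; simpl; [lra|rewrite IHn; ring]. Qed.

Lemma rsum_mult_r f c n : rsum (fun i => f i * c) n = rsum f n * c.
Proof. induction n; simpl; [ring|rewrite IHn; ring]. Qed.

Lemma rsum_const c n : rsum (fun _ => c) n = INR n * c.
Proof. induction n; simpl rsum; [simpl; ring|rewrite IHn, S_INR; ring]. Qed.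

Lemma rsum_zero n : rsum (fun _ => 0) n = 0.
Proof. rewrite rsum_const; ring. Qed.

Lemma rsum_nonneg f n : (forall i, (i < n)%nat -> 0 <= f i) -> 0 <= rsum f n.
Proof. intros H. rewrite <- (rsum_zero n). apply rsum_le; auto. Qed.

Lemma rsum_split f n m : rsum f (n + m) = rsum f n + rsum (fun i => f (n + i)%nat) m.
Proof.
  induction m; simpl. rewrite Nat.add_0_r; ring.
  rewrite Nat.add_succ_r; simpl; rewrite IHm; ring.
Qed.

Lemma rsum_shift f n : rsum f (S n) = f 0%nat + rsum (fun i => f (S i)) n.
Proof. induction n. simpl; ring. cbn [rsum] in *. rewrite IHn. ring. Qed.

Lemma rsum_rev f n : rsum f n = rsum (fun i => f (n - 1 - i)%nat) n.
Proof.
  induction n. auto.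
  rewrite (rsum_shift (fun i => f (S n - 1 - i)%nat)). cbn [rsum]. rewrite IHn.
  replace (S n - 1 - 0)%nat with n by lia. rewrite Rplus_comm. f_equal.
  apply rsum_ext. intros i Hi. f_equal. lia.
Qed.

Lemma rsum_mono f n m : (forall i, 0 <= f i) -> (n <= m)%nat -> rsum f n <= rsum f m.
Proof.
  intros H Hnm. replace m with (n + (m - n))%nat by lia. rewrite rsum_split.
  assert (0 <= rsum (fun i => f (n + i)%nat) (m - n)) by (apply rsum_nonneg; auto). lra.
Qed.

Lemma rsum_term_le f n i : (forall j, 0 <= f j) -> (i < n)%nat -> f i <= rsum f n.
Proof.
  intros H Hi. replace n with (i + S (n - S i))%nat by lia.
  rewrite rsum_split, rsum_shift, Nat.add_0_r.
  assert (0 <= rsum f i) by (apply rsum_nonneg; auto).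
  assert (0 <= rsum (fun j => f (i + S j)%nat) (n - S i)) by (apply rsum_nonneg; auto). lra.
Qed.

Lemma rsum_swap (f : nat -> nat -> R) n m :
  rsum (fun i => rsum (fun j => f i j) m) n = rsum (fun j => rsum (fun i => f i j) n) m.
Proof.
  induction n; simpl. symmetry; apply rsum_zero.
  rewrite IHn, <- rsum_plus. reflexivity.
Qed.

Lemma rsum_prod f g n : rsum f n * rsum g n = rsum (fun i => rsum (fun j => f i * g j) n) n.
Proof. rewrite <- rsum_mult_r. apply rsum_ext. intros i _. rewrite rsum_scal. auto. Qed.

Lemma rsum_prefix_le (f : nat -> R) j K : (forall k, 0 <= f k) ->
  rsum (fun k => if Nat.ltb k j then f k else 0) K <= rsum f j.
Proof.
  intros Hf. destruct (le_lt_dec K j).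
  - apply Rle_trans with (rsum f K); [|apply rsum_mono; auto].
    apply rsum_le. intros i Hi. destruct (Nat.ltb_spec i j); [lra|lia].
  - replace K with (j + (K - j))%nat by lia. rewrite rsum_split.
    rewrite (rsum_ext _ f) by (intros i Hi; destruct (Nat.ltb_spec i j); [auto|lia]).
    rewrite (rsum_ext (fun i => if Nat.ltb (j + i) j then f (j + i)%nat else 0) (fun _ => 0))
      by (intros i Hi; destruct (Nat.ltb_spec (j + i) j); [lia|ring]).
    rewrite rsum_zero. lra.
Qed.

Lemma rsum_shifted_le (g : nat -> R) j K G : (forall i, 0 <= g i) -> (forall n, rsum g n <= G) ->
  rsum (fun k => if Nat.ltb k j then 0 else g (k - j)%nat) K <= G.
Proof.
  intros Hg HG. assert (HG0 : 0 <= G) by (apply Rle_trans with (rsum g 0); [simpl; lra|auto]).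
  destruct (le_lt_dec K j).
  - rewrite (rsum_ext _ (fun _ => 0)) by (intros i Hi; destruct (Nat.ltb_spec i j); [ring|lia]).
    rewrite rsum_zero; lra.
  - replace K with (j + (K - j))%nat by lia. rewrite rsum_split.
    rewrite (rsum_ext (fun k => if Nat.ltb k j then 0 else g (k - j)%nat) (fun _ => 0))
      by (intros i Hi; destruct (Nat.ltb_spec i j); [ring|lia]).
    rewrite (rsum_ext (fun i => if Nat.ltb (j + i) j then 0 else g (j + i - j)%nat) g).
    + rewrite rsum_zero. specialize (HG (K - j)%nat). lra.
    + intros i Hi. destruct (Nat.ltb_spec (j + i) j); [lia|]. f_equal; lia.
Qed.

Lemma rsum_count_le_cover (P : nat -> Prop) (Q : nat -> nat -> Prop)
  (Pd : forall k, {P k} + {~ P k}) (Qd : forall i k, {Q i k} + {~ Q i k}) n m :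
  (forall k, P k -> exists i, (i < m)%nat /\ Q i k) ->
  rsum (fun k => if Pd k then 1 else 0) n
  <= rsum (fun i => rsum (fun k => if Qd i k then 1 else 0) n) m.
Proof.
  intros H. rewrite rsum_swap. apply rsum_le. intros k _. destruct (Pd k) as [p|].
  - destruct (H k p) as [i [Hi Hq]].
    apply Rle_trans with (if Qd i k then 1 else 0); [destruct (Qd i k); [lra|contradiction]|].
    apply (rsum_term_le (fun i => if Qd i k then 1 else 0)); auto.
    intros; destruct Qd; lra.
  - apply rsum_nonneg; intros; destruct Qd; lra.
Qed.

Lemma is_lim_seq_rsum (f : nat -> nat -> R) (g : nat -> R) K :
  (forall k, is_lim_seq (fun J => f k J) (g k)) ->
  is_lim_seq (fun J => rsum (fun k => f k J) K) (rsum g K).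
Proof.
  intros H. induction K; simpl; [apply is_lim_seq_const|apply is_lim_seq_plus'; auto].
Qed.

Lemma pow2_ge1 j : (1 <= 2 ^ j)%nat.
Proof. apply Nat.neq_0_lt_0, Nat.pow_nonzero; lia. Qed.

Lemma pow2_S_pred J : (2 ^ S J - 1 = (2 ^ J - 1) + 2 ^ J)%nat.
Proof. pose proof (pow2_ge1 J). simpl. lia. Qed.

Lemma rsum_blocks f J :
  rsum f (2 ^ J - 1) = rsum (fun j => rsum (fun i => f (2 ^ j - 1 + i)%nat) (2 ^ j)) J.
Proof. induction J. simpl; auto. rewrite pow2_S_pred, rsum_split, IHJ. cbn [rsum]. auto. Qed.

Lemma rprod_ext f g n : (forall i, (i < n)%nat -> f i = g i) -> rprod f n = rprod g n.
Proof.
  induction n; simpl; intros H; auto.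
  rewrite IHn by (intros; apply H; lia). rewrite H by lia; auto.
Qed.

Lemma rprod_le f g n : (forall i, (i < n)%nat -> 0 <= f i <= g i) -> rprod f n <= rprod g n.
Proof.
  induction n; simpl; intros H; [lra|].
  assert (0 <= f n <= g n) by (apply H; lia).
  assert (0 <= rprod f n).
  { clear IHn. induction n; simpl; [lra|]. apply Rmult_le_pos.
    - apply IHn; intros; apply H; lia.
    - apply H; lia. }
  assert (rprod f n <= rprod g n) by (apply IHn; intros; apply H; lia).
  apply Rmult_le_compat; lra.
Qed.

Lemma rprod_exp g n : rprod (fun i => exp (g i)) n = exp (rsum g n).
Proof. induction n; simpl. now rewrite exp_0. rewrite IHn, exp_plus; auto. Qed.

Lemma rprod_mult f g n : rprod (fun i => f i * g i) n = rprod f n * rprod g n.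
Proof. induction n; simpl; [ring|rewrite IHn; ring]. Qed.

Lemma rprod_const c n : rprod (fun _ => c) n = c ^ n.
Proof. induction n; simpl; [ring|rewrite IHn; ring]. Qed.

Definition Csub (z w : Cx) : Cx := (fst z - fst w, snd z - snd w).
Definition C0 : Cx := (0, 0).
Fixpoint csum (u : nat -> Cx) (n : nat) : Cx :=
  match n with O => C0 | S m => Cadd (csum u m) (u m) end.

(* [Cx] is Coquelicot's [C] and [Cnorm] its [Cmod]. *)
Lemma Cnorm_mul z w : Cnorm (Cmul z w) = Cnorm z * Cnorm w.
Proof. exact (Cmod_mult z w). Qed.

Lemma Cnorm_add z w : Cnorm (Cadd z w) <= Cnorm z + Cnorm w.
Proof. exact (Cmod_triangle z w). Qed.

Lemma Cnorm_ge0 z : 0 <= Cnorm z.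
Proof. exact (Cmod_ge_0 z). Qed.

Lemma Cnorm_C0 : Cnorm C0 = 0.
Proof. exact Cmod_0. Qed.

Lemma Cnorm_C1 : Cnorm C1 = 1.
Proof. exact Cmod_1. Qed.

Lemma Cnorm_fst z : Rabs (fst z) <= Cnorm z.
Proof. exact (re_le_Cmod z). Qed.

Lemma Cnorm_snd z : Rabs (snd z) <= Cnorm z.
Proof. unfold Cnorm. rewrite <- sqrt_Rsqr_abs. apply sqrt_le_1_alt. unfold Rsqr; nra. Qed.

Lemma Cnorm_sq z : Cnorm z ^ 2 = fst z ^ 2 + snd z ^ 2.
Proof. unfold Cnorm. rewrite pow2_sqrt; auto. nra. Qed.

Lemma Cnorm_le_abs_sum w : Cnorm w <= Rabs (fst w) + Rabs (snd w).
Proof.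
  pose proof (Rabs_pos (fst w)); pose proof (Rabs_pos (snd w)).
  unfold Cnorm. rewrite <- (sqrt_pow2 (Rabs (fst w) + Rabs (snd w))) by lra.
  apply sqrt_le_1_alt. rewrite <- (pow2_abs (fst w)), <- (pow2_abs (snd w)). simpl; nra.
Qed.

Lemma Cnorm_real r : 0 <= r -> Cnorm (r, 0) = r.
Proof.
  intros. unfold Cnorm; simpl.
  replace (r * (r * 1) + 0 * (0 * 1)) with (r ^ 2) by ring. apply sqrt_pow2; auto.
Qed.

Lemma Cnorm_scale c z : Cnorm (Cscale c z) = Rabs c * Cnorm z.
Proof.
  unfold Cnorm, Cscale; simpl. rewrite <- sqrt_Rsqr_abs, <- sqrt_mult_alt.
  - f_equal. unfold Rsqr; ring.
  - apply Rle_0_sqr.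
Qed.

Lemma Cnorm_pow z k : Cnorm (Cpow z k) = Cnorm z ^ k.
Proof. induction k; simpl. apply Cnorm_C1. rewrite Cnorm_mul, IHk; auto. Qed.

Lemma Cnorm_sub_tri z w : Cnorm z <= Cnorm w + Cnorm (Csub z w).
Proof.
  replace z with (Cadd w (Csub z w)) at 1. apply Cnorm_add.
  destruct z, w; unfold Cadd, Csub; simpl; f_equal; ring.
Qed.

Lemma Cmul_assoc x y z : Cmul x (Cmul y z) = Cmul (Cmul x y) z.
Proof. destruct x, y, z; unfold Cmul; simpl; f_equal; ring. Qed.

Lemma Cmul_comm x y : Cmul x y = Cmul y x.
Proof. destruct x, y; unfold Cmul; simpl; f_equal; ring. Qed.

Lemma Csub_Cmul c u v : Csub (Cmul c u) (Cmul c v) = Cmul c (Csub u v).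
Proof. destruct c, u, v; unfold Csub, Cmul; simpl; f_equal; ring. Qed.

Lemma Cpow_add z m n : Cpow z (m + n) = Cmul (Cpow z m) (Cpow z n).
Proof.
  induction m; simpl.
  - destruct (Cpow z n); unfold Cmul, C1; simpl; f_equal; ring.
  - rewrite IHm, Cmul_assoc; auto.
Qed.

Lemma Cmul_csum x u n : Cmul x (csum u n) = csum (fun i => Cmul x (u i)) n.
Proof.
  induction n; simpl.
  - destruct x; unfold Cmul, C0; simpl; f_equal; ring.
  - rewrite <- IHn. destruct x, (csum u n), (u n); unfold Cmul, Cadd; simpl; f_equal; ring.
Qed.

Lemma csum_ext u v n : (forall i, (i < n)%nat -> u i = v i) -> csum u n = csum v n.
Proof.
  induction n; simpl; intros H; auto.
  rewrite IHn by (intros; apply H; lia). rewrite H by lia; auto.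
Qed.

Lemma csum_fst u n : fst (csum u n) = rsum (fun i => fst (u i)) n.
Proof. induction n; simpl; auto. rewrite IHn; auto. Qed.

Lemma csum_snd u n : snd (csum u n) = rsum (fun i => snd (u i)) n.
Proof. induction n; simpl; auto. rewrite IHn; auto. Qed.

Lemma csum_split u n m :
  csum u (n + m) = Cadd (csum u n) (csum (fun i => u (n + i)%nat) m).
Proof.
  induction m; simpl.
  - rewrite Nat.add_0_r. destruct (csum u n); unfold Cadd, C0; simpl; f_equal; ring.
  - rewrite Nat.add_succ_r; simpl; rewrite IHm.
    destruct (csum u n), (csum (fun i => u (n + i)%nat) m), (u (n + m)%nat).
    unfold Cadd; simpl; f_equal; ring.
Qed.

Lemma csum_blocks u J :
  csum u (2 ^ J - 1) = csum (fun j => csum (fun i => u (2 ^ j - 1 + i)%nat) (2 ^ j)) J.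
Proof. induction J. simpl; auto. rewrite pow2_S_pred, csum_split, IHJ. cbn [csum]. auto. Qed.

Lemma Cnorm_csum u n : Cnorm (csum u n) <= rsum (fun i => Cnorm (u i)) n.
Proof.
  induction n; simpl. rewrite Cnorm_C0; lra.
  eapply Rle_trans; [apply Cnorm_add|]. lra.
Qed.

Lemma Csub_csum u v n : Csub (csum u n) (csum v n) = csum (fun i => Csub (u i) (v i)) n.
Proof.
  induction n; simpl. unfold Csub, C0; simpl; f_equal; ring.
  rewrite <- IHn. destruct (csum u n), (csum v n), (u n), (v n).
  unfold Csub, Cadd; simpl; f_equal; ring.
Qed.

Lemma Cpow_S_sub_le z w s p : Cnorm z <= s -> Cnorm w <= s ->
  Cnorm (Csub (Cpow z (S p)) (Cpow w (S p))) <= INR (S p) * s ^ p * Cnorm (Csub z w).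
Proof.
  intros Hz Hw. assert (Hs : 0 <= s) by (pose proof (Cnorm_ge0 z); lra).
  induction p.
  - simpl. replace (Csub (Cmul z C1) (Cmul w C1)) with (Csub z w). lra.
    destruct z, w; unfold Csub, Cmul, C1; simpl; f_equal; ring.
  - replace (Csub (Cpow z (S (S p))) (Cpow w (S (S p)))) with
      (Cadd (Cmul z (Csub (Cpow z (S p)) (Cpow w (S p)))) (Cmul (Cpow w (S p)) (Csub z w))).
    2:{ simpl. destruct (Cpow z p), (Cpow w p), z, w.
        unfold Csub, Cmul, Cadd; simpl; f_equal; ring. }
    eapply Rle_trans; [apply Cnorm_add|]. rewrite !Cnorm_mul, Cnorm_pow.
    assert (Cnorm w ^ S p <= s ^ S p) by (apply pow_incr; split; [apply Cnorm_ge0|auto]).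
    pose proof (Cnorm_ge0 (Csub z w)).
    pose proof (Cnorm_ge0 (Csub (Cpow z (S p)) (Cpow w (S p)))).
    assert (Cnorm z * Cnorm (Csub (Cpow z (S p)) (Cpow w (S p)))
            <= s * (INR (S p) * s ^ p * Cnorm (Csub z w))).
    { apply Rmult_le_compat; auto. apply Cnorm_ge0. }
    rewrite (S_INR (S p)). simpl pow in *. nra.
Qed.

Lemma Cpow_sub_le_disc z w i : Cnorm z <= 1 -> Cnorm w <= 1 ->
  Cnorm (Csub (Cpow z i) (Cpow w i)) <= INR i * Cnorm (Csub z w).
Proof.
  intros Hz Hw. destruct i.
  - simpl. replace (Csub C1 C1) with C0 by (unfold Csub, C1, C0; simpl; f_equal; ring).
    rewrite Cnorm_C0; lra.
  - pose proof (Cpow_S_sub_le z w 1 i Hz Hw). rewrite pow1, Rmult_1_r in H. auto.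
Qed.

Lemma Cnorm_rescale z r r' : Cnorm z = r -> 0 <= r' ->
  exists z', Cnorm z' = r' /\ Cnorm (Csub z z') <= Rabs (r - r').
Proof.
  intros Hz Hr'. pose proof (Cnorm_ge0 z) as Hr.
  destruct (Req_dec r 0) as [E|E].
  - exists (r', 0). rewrite Cnorm_real by lra. split; [auto|].
    assert (Hz0 : fst z = 0 /\ snd z = 0).
    { pose proof (Cnorm_sq z). rewrite Hz, E in H.
      pose proof (pow2_ge_0 (fst z)). pose proof (pow2_ge_0 (snd z)).
      simpl in *. split; nra. }
    replace (Csub z (r', 0)) with (- r', 0) by
      (destruct z; simpl in Hz0; destruct Hz0; subst; unfold Csub; simpl; f_equal; ring).
    rewrite E, Rminus_0_l. replace (- r', 0) with (Cscale (- r') C1)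
      by (unfold Cscale, C1; simpl; f_equal; ring).
    rewrite Cnorm_scale, Cnorm_C1; lra.
  - exists (Cscale (r' / r) z). split.
    + rewrite Cnorm_scale, Hz, Rabs_pos_eq. field; auto.
      apply Rmult_le_pos; [lra|left; apply Rinv_0_lt_compat; lra].
    + replace (Csub z (Cscale (r' / r) z)) with (Cscale (1 - r' / r) z)
        by (destruct z; unfold Csub, Cscale; simpl; f_equal; ring).
      rewrite Cnorm_scale, Hz. replace (r - r') with ((1 - r' / r) * r) by (field; auto).
      rewrite Rabs_mult, (Rabs_pos_eq r) by lra. lra.
Qed.

Lemma series_cv_nonneg_bounded (p : nat -> R) B :
  (forall k, 0 <= p k) -> (forall n, rsum p n <= B) ->
  exists l, Un_cv (fun N => sum_f_R0 p N) l.
Proof.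
  intros Hp HB. destruct (growing_cv (fun N => sum_f_R0 p N)) as [l Hl].
  - intros N. simpl. specialize (Hp (S N)). lra.
  - exists B. intros y [N HN]. rewrite HN, sum_f_R0_rsum. auto.
  - exists l; auto.
Qed.

Lemma series_cv_dominated (x b : nat -> R) B :
  (forall k, Rabs (x k) <= b k) -> (forall n, rsum b n <= B) ->
  exists l, Un_cv (fun N => sum_f_R0 x N) l.
Proof.
  intros Hx HB.
  destruct (series_cv_nonneg_bounded b B) as [lb Hb]; auto.
  { intros k. pose proof (Rabs_pos (x k)). specialize (Hx k). lra. }
  assert (Hex : ex_series x).
  { apply (ex_series_le x b); auto. exists lb. apply is_series_Reals. exact Hb. }
  destruct Hex as [l Hl]. exists l. apply is_series_Reals in Hl. exact Hl.
Qed.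

Lemma Cnorm_lim_le (x y : nat -> R) a b X : Un_cv x a -> Un_cv y b ->
  (forall N, Cnorm (x N, y N) <= X) -> Cnorm (a, b) <= X.
Proof.
  intros Hx Hy HX. apply is_lim_seq_Reals in Hx. apply is_lim_seq_Reals in Hy.
  assert (H : is_lim_seq (fun N => Cnorm (x N, y N)) (Cnorm (a, b))).
  { unfold Cnorm; simpl. apply (is_lim_seq_continuous sqrt (fun N => x N ^ 2 + y N ^ 2)).
    - apply continuity_pt_sqrt. nra.
    - simpl. apply is_lim_seq_plus'; apply is_lim_seq_mult'; auto;
        apply is_lim_seq_mult'; auto; apply is_lim_seq_const. }
  pose proof (is_lim_seq_le _ _ _ _ HX H (is_lim_seq_const X)). simpl in H0. auto.
Qed.

Lemma sum_f_R0_csum_fst u N : sum_f_R0 (fun k => fst (u k)) N = fst (csum u (S N)).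
Proof. rewrite csum_fst, sum_f_R0_rsum; auto. Qed.

Lemma sum_f_R0_csum_snd u N : sum_f_R0 (fun k => snd (u k)) N = snd (csum u (S N)).
Proof. rewrite csum_snd, sum_f_R0_rsum; auto. Qed.

Lemma Csum_to_sub_le u v w w' X : Csum_to u w -> Csum_to v w' ->
  (forall N, Cnorm (Csub (csum u (S N)) (csum v (S N))) <= X) -> Cnorm (Csub w w') <= X.
Proof.
  intros [H1 H2] [H3 H4] HX. unfold Csub.
  apply (Cnorm_lim_le (fun N => fst (csum u (S N)) - fst (csum v (S N)))
                      (fun N => snd (csum u (S N)) - snd (csum v (S N)))).
  - pose proof (CV_minus _ _ _ _ H1 H3). intros e He; destruct (H e He) as [M HM].
    exists M; intros n Hn. rewrite <- !sum_f_R0_csum_fst. apply HM; auto.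
  - pose proof (CV_minus _ _ _ _ H2 H4). intros e He; destruct (H e He) as [M HM].
    exists M; intros n Hn. rewrite <- !sum_f_R0_csum_snd. apply HM; auto.
  - intros N. apply HX.
Qed.

Lemma Csum_to_le_subseq u w X (phi : nat -> nat) :
  (forall n, (phi n < phi (S n))%nat) -> Csum_to u w ->
  (forall J, Cnorm (csum u (S (phi J))) <= X) -> Cnorm w <= X.
Proof.
  intros Hphi [H1 H2] HX. destruct w as [w1 w2].
  apply (Cnorm_lim_le (fun J => fst (csum u (S (phi J)))) (fun J => snd (csum u (S (phi J))))).
  - apply is_lim_seq_Reals. apply is_lim_seq_Reals in H1.
    apply (is_lim_seq_subseq _ _ phi (eventually_subseq phi Hphi)) in H1.
    eapply is_lim_seq_ext; [|apply H1]. intros n; simpl; rewrite sum_f_R0_csum_fst; auto.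
  - apply is_lim_seq_Reals. apply is_lim_seq_Reals in H2.
    apply (is_lim_seq_subseq _ _ phi (eventually_subseq phi Hphi)) in H2.
    eapply is_lim_seq_ext; [|apply H2]. intros n; simpl; rewrite sum_f_R0_csum_snd; auto.
  - intros J. specialize (HX J). destruct (csum u (S (phi J))); apply HX.
Qed.

Lemma exp_le_mono y z : y <= z -> exp y <= exp z.
Proof. intros H; destruct (Rle_lt_or_eq_dec _ _ H); [left; apply exp_increasing; auto|subst; lra]. Qed.

Lemma exp_ge_1 y : 0 <= y -> 1 <= exp y.
Proof. intros; rewrite <- exp_0; apply exp_le_mono; auto. Qed.

Lemma ln_le_mono x y : 0 < x -> x <= y -> ln x <= ln y.
Proof. intros Hx Hxy. destruct (Rle_lt_or_eq_dec _ _ Hxy); [left; apply ln_increasing; auto|subst; lra]. Qed.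

Lemma ln_ge0 x : 1 <= x -> 0 <= ln x.
Proof. intros. rewrite <- ln_1. apply ln_le_mono; lra. Qed.

Lemma exp_1_gt_2 : 2 < exp 1.
Proof. pose proof (exp_ineq1 1 ltac:(lra)). lra. Qed.

Lemma ln_2_le_1 : ln 2 <= 1.
Proof. rewrite <- (ln_exp 1). apply ln_le_mono; [lra|]. pose proof exp_1_gt_2. lra. Qed.

Lemma sinh_le_mul_cosh y : 0 <= y -> exp y - exp (-y) <= y * (exp y + exp (-y)).
Proof.
  intros Hy. destruct (Req_dec y 0) as [->|Hy0]; [rewrite Ropp_0, exp_0; lra|].
  set (g := fun y => y * (exp y + exp (-y)) - (exp y - exp (-y))).
  destruct (MVT_cor2 g (fun y => y * (exp y - exp (-y))) 0 y) as [c [Hc1 Hc2]]; [lra| |].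
  { intros c _. apply is_derive_Reals. unfold g. auto_derive; auto. ring. }
  unfold g in Hc1. rewrite Ropp_0, exp_0 in Hc1.
  assert (exp (- c) <= exp c) by (apply exp_le_mono; lra).
  assert (0 <= c * (exp c - exp (-c)) * (y - 0)) by (apply Rmult_le_pos; [apply Rmult_le_pos|]; lra).
  lra.
Qed.

Lemma cosh_le_exp_sq y : exp y + exp (-y) <= 2 * exp (y ^ 2 / 2).
Proof.
  assert (Hpos : forall y, 0 <= y -> exp y + exp (-y) <= 2 * exp (y ^ 2 / 2)).
  { clear y. intros y Hy. set (k := fun y => (exp y + exp (-y)) * exp (- (y ^ 2 / 2))).
    assert (Hk0 : k 0 = 2).
    { unfold k. replace (- (0 ^ 2 / 2)) with 0 by (simpl; field).
      rewrite Ropp_0, exp_0; ring. }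
    assert (Hky : k y <= 2).
    { destruct (Req_dec y 0) as [->|Hy0]; [lra|].
      destruct (MVT_cor2 k (fun y => ((exp y - exp (-y)) - y * (exp y + exp (-y)))
                                     * exp (- (y ^ 2 / 2))) 0 y) as [c [Hc1 Hc2]]; [lra| |].
      { intros c _. apply is_derive_Reals. unfold k. auto_derive; auto.
        replace (c ^ 2 / 2) with (c * (c * 1) * / 2) by (simpl; field). field. }
      pose proof (sinh_le_mul_cosh c ltac:(lra)). pose proof (exp_pos (- (c ^ 2 / 2))).
      assert (((exp c - exp (- c)) - c * (exp c + exp (- c))) * exp (- (c ^ 2 / 2)) * (y - 0) <= 0).
      { apply Rmult_le_0_r; [|lra]. apply Rmult_le_0_r; lra. }
      lra. }
    unfold k in Hky. replace (exp y + exp (-y)) with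
      ((exp y + exp (- y)) * exp (- (y ^ 2 / 2)) * exp (y ^ 2 / 2)).
    - apply Rmult_le_compat_r; [left; apply exp_pos|lra].
    - rewrite Rmult_assoc, <- exp_plus. replace (- (y ^ 2 / 2) + y ^ 2 / 2) with 0 by ring.
      rewrite exp_0; ring. }
  destruct (Rle_dec 0 y); auto. replace (y ^ 2) with ((-y) ^ 2) by ring.
  pose proof (Hpos (-y) ltac:(lra)). rewrite Ropp_involutive in H. lra.
Qed.

Lemma INR_pow2 n : INR (2 ^ n) = 2 ^ n.
Proof. rewrite pow_INR. simpl. replace (1 + 1) with 2 by ring. auto. Qed.

Lemma pow2_pos n : 0 < 2 ^ n.
Proof. apply pow_lt; lra. Qed.

Lemma pow2_le_exp (n : nat) : 2 ^ n <= exp (INR n).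
Proof.
  induction n; [simpl; rewrite exp_0; lra|]. rewrite S_INR, exp_plus. simpl.
  pose proof exp_1_gt_2. pose proof (pow_le 2 n ltac:(lra)). nra.
Qed.

Lemma exp_neg_8_le j : exp (- (8 * INR j)) <= (/ 256) ^ j.
Proof.
  pose proof (pow2_le_exp (8 * j)) as H. rewrite mult_INR in H. simpl INR in H.
  replace (1 + 1 + 1 + 1 + 1 + 1 + 1 + 1) with 8 in H by ring.
  replace (2 ^ (8 * j)) with (256 ^ j) in H by (rewrite pow_mult; simpl; f_equal; ring).
  rewrite exp_Ropp, pow_inv. apply Rinv_le_contravar; auto. apply pow_lt; lra.
Qed.

Lemma INR_cube_le_pow8 j : INR j ^ 3 <= 8 ^ j.
Proof.
  induction j; [simpl; lra|]. destruct j; [simpl; lra|].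
  assert (INR (S (S j)) ^ 3 <= 8 * INR (S j) ^ 3).
  { rewrite (S_INR (S j)). assert (1 <= INR (S j)) by (rewrite S_INR; pose proof (pos_INR j); lra).
    set (x := INR (S j)) in *.
    assert (0 <= (x - 1) * (7 * x * x + 4 * x + 1)) by (apply Rmult_le_pos; nra). simpl; nra. }
  replace (8 ^ S (S j)) with (8 * 8 ^ S j) by (simpl; ring). lra.
Qed.

Lemma bernoulli_ineq x m : 0 <= x -> 1 + INR m * x <= (1 + x) ^ m.
Proof.
  intros Hx. induction m; [simpl; lra|]. rewrite S_INR. simpl.
  assert (0 <= INR m * x) by (apply Rmult_le_pos; auto; apply pos_INR). nra.
Qed.

Lemma pow_one_sub_mul_le x m : 0 <= x <= 1 -> (1 - x) ^ m * (1 + INR m * x) <= 1.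
Proof.
  intros Hx. pose proof (bernoulli_ineq x m (proj1 Hx)).
  assert ((1 - x) ^ m * (1 + x) ^ m <= 1).
  { rewrite <- Rpow_mult_distr.
    apply Rle_trans with (1 ^ m); [apply pow_incr; nra|rewrite pow1; lra]. }
  assert (0 <= (1 - x) ^ m) by (apply pow_le; lra). nra.
Qed.

Lemma rsum_pow2 n : rsum (fun i => 2 ^ i) n = 2 ^ n - 1.
Proof. induction n; simpl rsum; [simpl; lra|rewrite IHn; simpl; ring]. Qed.

Lemma rsum_geom_half n : rsum (fun i => (/ 2) ^ i) n = 2 - 2 * (/ 2) ^ n.
Proof. induction n; simpl rsum; [simpl; lra|rewrite IHn; simpl; field]. Qed.

Lemma rsum_sq_half n : rsum (fun i => (INR i + 1) ^ 2 * (/ 2) ^ i) n =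
  12 - (INR n ^ 2 + 4 * INR n + 6) * 2 * (/ 2) ^ n.
Proof. induction n; cbn [rsum]; [simpl; lra|rewrite IHn, S_INR; simpl; field]. Qed.

Lemma rsum_sq_half_le n : rsum (fun i => (INR i + 1) ^ 2 * (/ 2) ^ i) n <= 12.
Proof.
  rewrite rsum_sq_half. pose proof (pos_INR n).
  assert (0 < (/ 2) ^ n) by (apply pow_lt; lra). nra.
Qed.

Lemma rsum_lin_geom_eq x n : rsum (fun k => (INR k + 1) * x ^ k) n * (1 - x) ^ 2
  = 1 - (INR n + 1) * x ^ n + INR n * x ^ S n.
Proof. induction n; [simpl; ring|]. cbn [rsum]. rewrite Rmult_plus_distr_r, IHn, S_INR. simpl; ring. Qed.

Lemma rsum_lin_geom_le x n : 0 <= x < 1 -> rsum (fun k => (INR k + 1) * x ^ k) n <= / (1 - x) ^ 2.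
Proof.
  intros Hx. assert (Hp : 0 < (1 - x) ^ 2) by (apply pow_lt; lra).
  apply Rmult_le_reg_r with ((1 - x) ^ 2); auto. rewrite rsum_lin_geom_eq, Rinv_l by lra.
  assert (0 <= x ^ n) by (apply pow_le; lra). pose proof (pos_INR n).
  assert (0 <= INR n * x ^ n) by (apply Rmult_le_pos; auto).
  simpl pow at 2. nra.
Qed.

Lemma rsum_quad_geom_eq x n : rsum (fun k => (INR k + 1) * (INR k + 2) / 2 * x ^ k) n * (1 - x)
  = rsum (fun k => (INR k + 1) * x ^ k) n - INR n * (INR n + 1) / 2 * x ^ n.
Proof. induction n; [simpl; field|]. cbn [rsum]. rewrite Rmult_plus_distr_r, IHn, S_INR. simpl; field. Qed.

Lemma rsum_quad_geom_le x n : 0 <= x < 1 ->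
  rsum (fun k => (INR k + 1) * (INR k + 2) * x ^ k) n <= 2 / (1 - x) ^ 3.
Proof.
  intros Hx.
  rewrite (rsum_ext _ (fun k => 2 * ((INR k + 1) * (INR k + 2) / 2 * x ^ k))) by (intros; field).
  rewrite rsum_scal. unfold Rdiv. apply Rmult_le_compat_l; [lra|].
  apply Rmult_le_reg_r with (1 - x); [lra|]. rewrite rsum_quad_geom_eq.
  pose proof (rsum_lin_geom_le x n Hx). pose proof (pos_INR n).
  assert (0 <= INR n * (INR n + 1) / 2 * x ^ n).
  { apply Rmult_le_pos; [apply Rmult_le_pos; [nra|lra]|apply pow_le; lra]. }
  replace (/ (1 - x) ^ 3 * (1 - x)) with (/ (1 - x) ^ 2) by (field; lra). lra.
Qed.

Lemma nat_floor_ex y : 0 <= y -> exists m : nat, INR m <= y < INR m + 1.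
Proof.
  intros Hy. destruct (base_Int_part y) as [H1 H2]. set (z := Int_part y) in *.
  assert (Hz : (0 <= z)%Z) by (assert (-1 < z)%Z by (apply lt_IZR; simpl; lra); lia).
  exists (Z.to_nat z). rewrite INR_IZR_INZ, Z2Nat.id by auto. lra.
Qed.

Lemma frac_part_eq u (q : nat) f : 0 <= f < 1 -> u = INR q + f -> frac_part u = f.
Proof.
  intros Hf Hu. rewrite INR_IZR_INZ in Hu.
  destruct (Int_part_frac_part_spec u (Z.of_nat q) f Hf Hu). auto.
Qed.

(** * Sign patterns and a Chernoff bound *)

Definition bit_sign (i k : nat) : R := if Nat.ltb (k mod 2 ^ (S i)) (2 ^ i) then 1 else -1.

Definition bit_sign_sum (x : nat -> R) (m k : nat) : R := rsum (fun i => x i * bit_sign i k) m.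

Lemma bit_sign_high i m k : (i < m)%nat -> bit_sign i (2 ^ m + k) = bit_sign i k.
Proof.
  intros H. unfold bit_sign. replace (2 ^ m + k)%nat with (k + 2 ^ (m - S i) * 2 ^ S i)%nat.
  - rewrite Nat.Div0.mod_add. auto.
  - rewrite <- Nat.pow_add_r. replace (m - S i + S i)%nat with m by lia. lia.
Qed.

Lemma bit_sign_top_low m k : (k < 2 ^ m)%nat -> bit_sign m k = 1.
Proof.
  intros H. unfold bit_sign. rewrite Nat.mod_small by (simpl; lia).
  apply Nat.ltb_lt in H. rewrite H; auto.
Qed.

Lemma bit_sign_top_high m k : (k < 2 ^ m)%nat -> bit_sign m (2 ^ m + k) = -1.
Proof.
  intros H. unfold bit_sign. rewrite Nat.mod_small by (simpl; lia).
  destruct (Nat.ltb_spec (2 ^ m + k) (2 ^ m)); [lia|auto].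
Qed.

Lemma bit_sign_sum_opp x n k : - bit_sign_sum x n k = bit_sign_sum (fun i => - x i) n k.
Proof.
  unfold bit_sign_sum. rewrite <- (Rmult_1_l (rsum _ _)) at 1.
  rewrite Ropp_mult_distr_l, <- rsum_scal. apply rsum_ext; intros; ring.
Qed.

(* The patterns [k < 2^m] run through all sign choices, so a sum of products factors. *)
Lemma rsum_rprod_bit_sign (h : nat -> R -> R) m :
  rsum (fun k => rprod (fun i => h i (bit_sign i k)) m) (2 ^ m)
  = rprod (fun i => h i 1 + h i (-1)) m.
Proof.
  induction m; [simpl; ring|].
  replace (2 ^ S m)%nat with (2 ^ m + 2 ^ m)%nat by (simpl; lia).
  rewrite rsum_split. cbn [rprod].
  rewrite (rsum_ext _ (fun k => rprod (fun i => h i (bit_sign i k)) m * h m 1))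
    by (intros k Hk; rewrite bit_sign_top_low; auto).
  rewrite (rsum_ext (fun k => rprod (fun i => h i (bit_sign i (2 ^ m + k))) m
                              * h m (bit_sign m (2 ^ m + k)))
                    (fun k => rprod (fun i => h i (bit_sign i k)) m * h m (-1))).
  - rewrite !rsum_mult_r, IHm. ring.
  - intros k Hk. rewrite bit_sign_top_high by auto. f_equal.
    apply rprod_ext. intros; rewrite bit_sign_high; auto.
Qed.

Lemma chernoff_bit_sign (x : nat -> R) m V c :
  0 < V -> rsum (fun i => x i ^ 2) m <= V -> 0 <= c ->
  rsum (fun k => if Rle_dec c (bit_sign_sum x m k) then 1 else 0) (2 ^ m)
  <= 2 ^ m * exp (- (c ^ 2 / (2 * V))).
Proof.
  intros HV Hx Hc. set (th := c / V).
  assert (Hth : 0 <= th) by (unfold th; apply Rmult_le_pos; [lra|left; apply Rinv_0_lt_compat; lra]).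
  apply Rle_trans with (rsum (fun k => exp (th * bit_sign_sum x m k) * exp (- (th * c))) (2 ^ m)).
  { apply rsum_le. intros k _. destruct (Rle_dec c (bit_sign_sum x m k)).
    - rewrite <- exp_plus. apply exp_ge_1. nra.
    - left. apply Rmult_lt_0_compat; apply exp_pos. }
  rewrite rsum_mult_r.
  assert (E : rsum (fun k => exp (th * bit_sign_sum x m k)) (2 ^ m)
              = rprod (fun i => exp (th * x i * 1) + exp (th * x i * -1)) m).
  { rewrite <- (rsum_rprod_bit_sign (fun i s => exp (th * x i * s))). apply rsum_ext. intros k _.
    unfold bit_sign_sum. rewrite <- rsum_scal, <- rprod_exp. apply rprod_ext. intros; f_equal; ring. }
  rewrite E.
  apply Rle_trans with (rprod (fun i => 2 * exp ((th * x i) ^ 2 / 2)) m * exp (- (th * c))).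
  { apply Rmult_le_compat_r; [left; apply exp_pos|]. apply rprod_le. intros i _. split.
    - left; apply Rplus_lt_0_compat; apply exp_pos.
    - rewrite Rmult_1_r. replace (th * x i * -1) with (- (th * x i)) by ring. apply cosh_le_exp_sq. }
  rewrite rprod_mult, rprod_const, rprod_exp, Rmult_assoc.
  apply Rmult_le_compat_l; [apply pow_le; lra|].
  rewrite <- exp_plus. apply exp_le_mono.
  rewrite (rsum_ext _ (fun i => (th ^ 2 / 2) * x i ^ 2)) by (intros; field). rewrite rsum_scal.
  assert (th ^ 2 / 2 * rsum (fun i => x i ^ 2) m <= th ^ 2 / 2 * V).
  { apply Rmult_le_compat_l; auto. apply Rmult_le_pos; [apply pow_le; auto|lra]. }
  assert (th ^ 2 / 2 * V - th * c = - (c ^ 2 / (2 * V))) by (unfold th; field; lra). lra.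
Qed.

(** * Rademacher functions on dyadic intervals *)

Lemma rad_abs n t : Rabs (rad n t) <= 1.
Proof. unfold rad, rad0. repeat destruct Req_EM_T; repeat destruct Rlt_dec; apply Rabs_le; lra. Qed.

Lemma frac_part_dyadic m k u : INR k / 2 ^ m < u < (INR k + 1) / 2 ^ m ->
  INR (k mod 2 ^ m) / 2 ^ m < frac_part u < (INR (k mod 2 ^ m) + 1) / 2 ^ m.
Proof.
  intros Hu. set (d := (2 ^ m)%nat). set (q := (k / d)%nat). set (r := (k mod d)%nat).
  assert (Hd : (0 < d)%nat) by (apply pow2_ge1).
  assert (Hk : INR k = INR q * 2 ^ m + INR r).
  { rewrite <- INR_pow2. fold d. rewrite <- mult_INR, <- plus_INR. f_equal.
    unfold q, r. rewrite Nat.mul_comm. apply Nat.div_mod_eq. }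
  assert (Hr : INR r + 1 <= 2 ^ m).
  { rewrite <- INR_pow2, <- S_INR. apply le_INR. apply Nat.mod_upper_bound. lia. }
  pose proof (pow2_pos m). pose proof (pos_INR r).
  rewrite Hk in Hu. fold d r.
  assert (Hf : frac_part u = u - INR q).
  { apply frac_part_eq with q; [|ring]. split.
    - apply Rmult_le_reg_r with (2 ^ m); [lra|].
      assert (INR q * 2 ^ m + INR r < u * 2 ^ m) by
        (apply Rmult_lt_reg_r with (/ 2 ^ m); [apply Rinv_0_lt_compat; lra|];
         rewrite Rmult_assoc, Rinv_r, Rmult_1_r by lra; apply Hu).
      nra.
    - apply Rmult_lt_reg_r with (2 ^ m); [lra|].
      assert (u * 2 ^ m < INR q * 2 ^ m + INR r + 1) by
        (apply Rmult_lt_reg_r with (/ 2 ^ m); [apply Rinv_0_lt_compat; lra|];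
         rewrite Rmult_assoc, Rinv_r, Rmult_1_r by lra; apply Hu).
      nra. }
  rewrite Hf. replace ((INR q * 2 ^ m + INR r) / 2 ^ m) with (INR q + INR r / 2 ^ m) in Hu
    by (field; lra).
  replace ((INR q * 2 ^ m + INR r + 1) / 2 ^ m) with (INR q + (INR r + 1) / 2 ^ m) in Hu
    by (field; lra).
  lra.
Qed.

Lemma rad0_dyadic i r u : (r < 2 ^ S i)%nat ->
  INR r / 2 ^ S i < frac_part u < (INR r + 1) / 2 ^ S i ->
  rad0 u = if Nat.ltb r (2 ^ i) then 1 else -1.
Proof.
  intros Hr Hf. unfold rad0. set (f := frac_part u) in *.
  pose proof (pow2_pos i). pose proof (pos_INR r).
  assert (0 <= INR r / 2 ^ S i) by (apply Rmult_le_pos; [lra|left; apply Rinv_0_lt_compat, pow2_pos]).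
  destruct (Req_EM_T f 0); [lra|]. simpl pow in Hf.
  destruct (Nat.ltb_spec r (2 ^ i)).
  - assert (INR r + 1 <= 2 ^ i) by (rewrite <- INR_pow2, <- S_INR; apply le_INR; lia).
    assert ((INR r + 1) / (2 * 2 ^ i) <= 1 / 2)
      by (apply Rmult_le_reg_r with (2 * 2 ^ i); [lra|]; field_simplify; lra).
    destruct (Rlt_dec f (1 / 2)); [auto|lra].
  - assert (2 ^ i <= INR r) by (rewrite <- INR_pow2; apply le_INR; lia).
    assert (1 / 2 <= INR r / (2 * 2 ^ i))
      by (apply Rmult_le_reg_r with (2 * 2 ^ i); [lra|]; field_simplify; lra).
    destruct (Rlt_dec f (1 / 2)); [lra|]. destruct (Req_EM_T f (1 / 2)); [lra|auto].
Qed.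

Lemma rad_bit_sign L k n t : (n < L)%nat ->
  INR k / 2 ^ L < t < (INR k + 1) / 2 ^ L -> rad n t = bit_sign (L - 1 - n) k.
Proof.
  intros HL Ht. set (i := (L - 1 - n)%nat).
  assert (HL2 : 2 ^ L = 2 ^ n * 2 ^ S i) by (rewrite <- pow_add; f_equal; unfold i; lia).
  pose proof (pow2_pos n). pose proof (pow2_pos (S i)).
  assert (Hu : INR k / 2 ^ S i < 2 ^ n * t < (INR k + 1) / 2 ^ S i).
  { rewrite HL2 in Ht.
    replace (INR k / (2 ^ n * 2 ^ S i)) with (INR k / 2 ^ S i / 2 ^ n) in Ht by (field; lra).
    replace ((INR k + 1) / (2 ^ n * 2 ^ S i)) with ((INR k + 1) / 2 ^ S i / 2 ^ n) in Ht
      by (field; lra).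
    destruct Ht as [Ht1 Ht2]. split.
    - apply Rmult_lt_reg_r with (/ 2 ^ n); [apply Rinv_0_lt_compat; lra|].
      replace (2 ^ n * t * / 2 ^ n) with t by (field; lra). exact Ht1.
    - apply Rmult_lt_reg_r with (/ 2 ^ n); [apply Rinv_0_lt_compat; lra|].
      replace (2 ^ n * t * / 2 ^ n) with t by (field; lra). exact Ht2. }
  unfold rad. apply rad0_dyadic; [apply Nat.mod_upper_bound, Nat.pow_nonzero; lia|].
  apply frac_part_dyadic; auto.
Qed.

Lemma rad_dyadic_0 t p k n : t = INR k / 2 ^ p -> (p <= n)%nat -> rad n t = 0.
Proof.
  intros Ht Hn. unfold rad, rad0.
  assert (frac_part (2 ^ n * t) = 0).
  { apply frac_part_eq with (k * 2 ^ (n - p))%nat; [lra|]. rewrite mult_INR, INR_pow2, Ht.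
    replace n with (p + (n - p))%nat at 1 by lia. rewrite pow_add. field.
    pose proof (pow2_pos p); lra. }
  rewrite H. destruct (Req_EM_T 0 0); [auto|lra].
Qed.

Definition dyadic (t : R) : Prop := exists p k : nat, t = INR k / 2 ^ p.

Lemma nondyadic_in_dyadic_interval t L : 0 <= t <= 1 -> ~ dyadic t ->
  exists k, (k < 2 ^ L)%nat /\ INR k / 2 ^ L < t < (INR k + 1) / 2 ^ L.
Proof.
  intros Ht Hd. set (u := t * 2 ^ L). pose proof (pow2_pos L).
  destruct (nat_floor_ex u) as [k [Hk1 Hk2]]; [unfold u; nra|].
  assert (Hne : u <> INR k) by (intros E; apply Hd; exists L, k; rewrite <- E; unfold u; field; lra).
  assert (Ht1 : t < 1).
  { destruct (Rle_lt_or_eq_dec _ _ (proj2 Ht)); auto.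
    exfalso; apply Hd. exists 0%nat, 1%nat. simpl; lra. }
  exists k. split.
  - apply INR_lt. rewrite INR_pow2. unfold u in *. nra.
  - split; apply Rmult_lt_reg_r with (2 ^ L); auto; unfold Rdiv;
      rewrite Rmult_assoc, Rinv_l, Rmult_1_r by lra; fold u; lra.
Qed.

(** * Dyadic blocks of the derivative *)

Definition rad_coef (a : nat -> Cx) (t : R) (n : nat) : Cx := Cscale (INR n * rad n t) (a n).

Definition block (a : nat -> Cx) (t : R) (j : nat) (z : Cx) : Cx :=
  csum (fun i => Cmul (rad_coef a t (2 ^ j + i)) (Cpow z i)) (2 ^ j).

(* Block [j] with the signs it has on the [k]-th dyadic interval of length
   [2^(-2^(j+1))] (see [block_eq_pattern]). *)
Definition block_pattern (a : nat -> Cx) (j k : nat) (z : Cx) : Cx :=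
  csum (fun i => Cmul (Cscale (INR (2 ^ j + i) * bit_sign (2 ^ j - 1 - i) k) (a (2 ^ j + i)%nat))
                      (Cpow z i)) (2 ^ j).

Definition block_energy (a : nat -> Cx) (j : nat) : R :=
  rsum (fun i => (INR (2 ^ j + i) * Cnorm (a (2 ^ j + i)%nat)) ^ 2) (2 ^ j).

(* The summand [4^(-j)] only makes the variance proxy positive. *)
Definition block_var (a : nat -> Cx) (j : nat) : R := block_energy a j + (/ 4) ^ j.
Definition block_level (a : nat -> Cx) (j : nat) : R := sqrt (32 * INR j * block_var a j).
Definition block_bound (a : nat -> Cx) (j : nat) : R := block_level a j + 2 * sqrt (block_var a j).

Definition coef_bounded (a : nat -> Cx) (A : R) : Prop := forall n, (1 <= n)%nat -> Cnorm (a n) <= A.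

Lemma coef_bounded_ge0 a A : coef_bounded a A -> 0 <= A.
Proof. intros H. pose proof (H 1%nat ltac:(lia)). pose proof (Cnorm_ge0 (a 1%nat)). lra. Qed.

Lemma block_var_pos a j : 0 < block_var a j.
Proof.
  unfold block_var, block_energy. assert (0 < (/ 4) ^ j) by (apply pow_lt; lra).
  assert (0 <= rsum (fun i => (INR (2 ^ j + i) * Cnorm (a (2 ^ j + i)%nat)) ^ 2) (2 ^ j))
    by (apply rsum_nonneg; intros; apply pow2_ge_0). lra.
Qed.

Lemma block_level_pos a j : (1 <= j)%nat -> 0 < block_level a j.
Proof.
  intros Hj. unfold block_level. apply sqrt_lt_R0. pose proof (block_var_pos a j).
  assert (1 <= INR j) by (apply (le_INR 1); auto). nra.
Qed.

Lemma block_bound_ge0 a j : 0 <= block_bound a j.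
Proof.
  unfold block_bound, block_level.
  pose proof (sqrt_pos (32 * INR j * block_var a j)). pose proof (sqrt_pos (block_var a j)). lra.
Qed.

Lemma block_bound_sq_le a j : (1 <= j)%nat -> block_bound a j ^ 2 <= 72 * INR j * block_var a j.
Proof.
  intros Hj. unfold block_bound, block_level. pose proof (block_var_pos a j).
  assert (1 <= INR j) by (apply (le_INR 1); auto).
  set (x := sqrt (32 * INR j * block_var a j)). set (y := sqrt (block_var a j)).
  assert (x ^ 2 = 32 * INR j * block_var a j) by (unfold x; apply pow2_sqrt; nra).
  assert (y ^ 2 = block_var a j) by (unfold y; apply pow2_sqrt; lra).
  pose proof (pow2_ge_0 (x - 2 * y)). simpl in *. nra.
Qed.

Lemma rad_coef_le a t n A : Cnorm (a n) <= A -> Cnorm (rad_coef a t n) <= INR n * A.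
Proof.
  intros H. unfold rad_coef. rewrite Cnorm_scale, Rabs_mult, Rabs_pos_eq by apply pos_INR.
  pose proof (rad_abs n t). pose proof (pos_INR n). pose proof (Cnorm_ge0 (a n)).
  pose proof (Rabs_pos (rad n t)).
  rewrite Rmult_assoc. apply Rmult_le_compat_l; auto.
  rewrite <- (Rmult_1_l A). apply Rmult_le_compat; auto.
Qed.

Lemma rad_coef_le_block_var a j t i : (i < 2 ^ j)%nat ->
  Cnorm (rad_coef a t (2 ^ j + i)) <= sqrt (block_var a j).
Proof.
  intros Hi. set (h := INR (2 ^ j + i) * Cnorm (a (2 ^ j + i)%nat)).
  assert (H0 : 0 <= h) by (apply Rmult_le_pos; [apply pos_INR|apply Cnorm_ge0]).
  apply Rle_trans with h.
  { apply rad_coef_le. lra. }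
  rewrite <- (sqrt_pow2 _ H0). apply sqrt_le_1_alt. unfold block_var, block_energy.
  pose proof (rsum_term_le (fun i => (INR (2 ^ j + i) * Cnorm (a (2 ^ j + i)%nat)) ^ 2)
                (2 ^ j) i (fun _ => pow2_ge_0 _) Hi).
  assert (0 < (/ 4) ^ j) by (apply pow_lt; lra). unfold h. simpl in *. lra.
Qed.

Lemma block_le_crude a t A j z : coef_bounded a A -> Cnorm z <= 1 ->
  Cnorm (block a t j z) <= 2 ^ j * (2 ^ S j * A).
Proof.
  intros HA Hz. pose proof (coef_bounded_ge0 a A HA).
  unfold block. eapply Rle_trans; [apply Cnorm_csum|].
  rewrite <- INR_pow2, <- rsum_const. apply rsum_le. intros i Hi.
  rewrite Cnorm_mul, Cnorm_pow.
  pose proof (rad_coef_le a t (2 ^ j + i) A (HA (2 ^ j + i)%nat ltac:(pose proof (pow2_ge1 j); lia))).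
  assert (INR (2 ^ j + i) <= 2 ^ S j) by (rewrite <- INR_pow2; apply le_INR; simpl; lia).
  assert (Cnorm z ^ i <= 1) by (rewrite <- (pow1 i); apply pow_incr; split; [apply Cnorm_ge0|auto]).
  pose proof (pow_le _ i (Cnorm_ge0 z)). pose proof (Cnorm_ge0 (rad_coef a t (2 ^ j + i))).
  apply Rle_trans with (INR (2 ^ j + i) * A * 1); [apply Rmult_le_compat; auto|].
  rewrite Rmult_1_r. apply Rmult_le_compat_r; auto.
Qed.

Lemma block_lipschitz a t j z z' : Cnorm z <= 1 -> Cnorm z' <= 1 ->
  Cnorm (Csub (block a t j z) (block a t j z'))
  <= 4 ^ j * sqrt (block_var a j) * Cnorm (Csub z z').
Proof.
  intros Hz Hz'. unfold block. rewrite Csub_csum. eapply Rle_trans; [apply Cnorm_csum|].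
  replace (4 ^ j * sqrt (block_var a j) * Cnorm (Csub z z'))
    with (INR (2 ^ j) * (sqrt (block_var a j) * (INR (2 ^ j) * Cnorm (Csub z z')))).
  2:{ rewrite INR_pow2. replace 4 with (2 * 2) by ring. rewrite Rpow_mult_distr. ring. }
  rewrite <- rsum_const. apply rsum_le. intros i Hi. rewrite Csub_Cmul, Cnorm_mul.
  pose proof (rad_coef_le_block_var a j t i Hi). pose proof (Cpow_sub_le_disc z z' i Hz Hz').
  assert (INR i * Cnorm (Csub z z') <= INR (2 ^ j) * Cnorm (Csub z z'))
    by (apply Rmult_le_compat_r; [apply Cnorm_ge0|apply le_INR; lia]).
  apply Rmult_le_compat; auto using Cnorm_ge0; lra.
Qed.

Lemma block_eq_pattern a t j k z :
  INR k / 2 ^ (2 ^ S j) < t < (INR k + 1) / 2 ^ (2 ^ S j) -> block a t j z = block_pattern a j k z.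
Proof.
  intros Ht. unfold block, block_pattern. apply csum_ext. intros i Hi. unfold rad_coef.
  pose proof (pow2_ge1 j). assert (E : (2 ^ S j = 2 ^ j + 2 ^ j)%nat) by (simpl; lia).
  rewrite (rad_bit_sign (2 ^ S j) k) by (auto; rewrite E; lia).
  do 4 f_equal. rewrite E. lia.
Qed.

Lemma block_dyadic_0 a t p k j z : t = INR k / 2 ^ p -> (S p <= j)%nat -> Cnorm (block a t j z) = 0.
Proof.
  intros Ht Hj. apply Rle_antisym; [|apply Cnorm_ge0].
  unfold block. eapply Rle_trans; [apply Cnorm_csum|]. rewrite <- (rsum_zero (2 ^ j)).
  apply rsum_le. intros i Hi. unfold rad_coef.
  rewrite (rad_dyadic_0 t p k (2 ^ j + i) Ht).
  - rewrite Rmult_0_r, Cnorm_mul, Cnorm_scale, Rabs_R0. lra.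
  - pose proof (Nat.pow_gt_lin_r 2 j ltac:(lia)). lia.
Qed.

Lemma le_or_le_opp_of_sq_le c p : 0 <= c -> c ^ 2 <= p ^ 2 -> c <= p \/ c <= - p.
Proof. intros. destruct (Rle_dec 0 p); [left|right]; nra. Qed.

(* If the vector is large, one of the four sums of [x], [-x], [y], [-y] exceeds [c]. *)
Lemma count_pair_large (x y : nat -> R) L V c : 0 < V -> 0 <= c ->
  rsum (fun i => x i ^ 2) L <= V -> rsum (fun i => y i ^ 2) L <= V ->
  rsum (fun k => if Rle_dec (sqrt 2 * c) (Cnorm (bit_sign_sum x L k, bit_sign_sum y L k))
                 then 1 else 0) (2 ^ L)
  <= 4 * (2 ^ L * exp (- (c ^ 2 / (2 * V)))).
Proof.
  intros HV Hc Hx Hy.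
  set (v := fun s : nat => match s with
                           | 0 => x | 1 => fun i => - x i | 2 => y | _ => fun i => - y i end%nat).
  assert (Hv : forall s, rsum (fun i => v s i ^ 2) L <= V).
  { intros [|[|[|s]]]; simpl; auto;
      rewrite (rsum_ext _ (fun i => _ i ^ 2)) by (intros; ring); auto. }
  eapply Rle_trans.
  - apply (rsum_count_le_cover _ (fun s k => c <= bit_sign_sum (v s) L k)
             (fun k => Rle_dec _ _) (fun s k => Rle_dec _ _) (2 ^ L) 4).
    intros k Hk. set (p := bit_sign_sum x L k) in Hk. set (q := bit_sign_sum y L k) in Hk.
    assert (Hsq : 2 * c ^ 2 <= p ^ 2 + q ^ 2).
    { replace (p ^ 2 + q ^ 2) with (Cnorm (p, q) ^ 2) by (rewrite Cnorm_sq; reflexivity).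
      replace (2 * c ^ 2) with ((sqrt 2 * c) ^ 2)
        by (rewrite Rpow_mult_distr, pow2_sqrt; lra).
      apply pow_incr. split; auto. apply Rmult_le_pos; [apply sqrt_pos|auto]. }
    pose proof (bit_sign_sum_opp x L k). pose proof (bit_sign_sum_opp y L k).
    destruct (Rle_dec (c ^ 2) (p ^ 2)).
    + destruct (le_or_le_opp_of_sq_le c p Hc); auto.
      * exists 0%nat; split; [lia|auto].
      * exists 1%nat; split; [lia|]. simpl. unfold p in *. lra.
    + destruct (le_or_le_opp_of_sq_le c q Hc); [lra| |].
      * exists 2%nat; split; [lia|auto].
      * exists 3%nat; split; [lia|]. simpl. unfold q in *. lra.
  - simpl rsum. rewrite Rplus_0_l.
    pose proof (chernoff_bit_sign x L V c HV (Hv 0%nat) Hc).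
    pose proof (chernoff_bit_sign (fun i => - x i) L V c HV (Hv 1%nat) Hc).
    pose proof (chernoff_bit_sign y L V c HV (Hv 2%nat) Hc).
    pose proof (chernoff_bit_sign (fun i => - y i) L V c HV (Hv 3%nat) Hc). lra.
Qed.

(* Zero-padded reversal: bit [2^j - 1 - i] of the pattern carries the sign of term [i]. *)
Definition rev_pad (M : nat) (h : nat -> R) (i : nat) : R :=
  if Nat.ltb i M then h (M - 1 - i)%nat else 0.

Lemma rev_pad_bit_sign_sum M h k :
  rsum (fun i => bit_sign (M - 1 - i) k * h i) M = bit_sign_sum (rev_pad M h) (M + M) k.
Proof.
  unfold bit_sign_sum. rewrite rsum_split.
  rewrite (rsum_ext (fun i => rev_pad M h (M + i) * bit_sign (M + i) k) (fun _ => 0))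
    by (intros i _; unfold rev_pad; destruct (Nat.ltb_spec (M + i) M); [lia|ring]).
  rewrite rsum_zero, Rplus_0_r, rsum_rev. apply rsum_ext. intros i Hi. unfold rev_pad.
  destruct (Nat.ltb_spec i M); [|lia]. replace (M - 1 - (M - 1 - i))%nat with i by lia. ring.
Qed.

Lemma rev_pad_sq M h : rsum (fun i => rev_pad M h i ^ 2) (M + M) = rsum (fun i => h i ^ 2) M.
Proof.
  rewrite rsum_split.
  rewrite (rsum_ext (fun i => rev_pad M h (M + i) ^ 2) (fun _ => 0))
    by (intros i _; unfold rev_pad; destruct (Nat.ltb_spec (M + i) M); [lia|ring]).
  rewrite rsum_zero, Rplus_0_r, (rsum_rev (fun i => h i ^ 2)). apply rsum_ext.
  intros i Hi. unfold rev_pad. destruct (Nat.ltb_spec i M); [auto|lia].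
Qed.

Definition block_term (a : nat -> Cx) (j : nat) (z : Cx) (i : nat) : Cx :=
  Cmul (Cscale (INR (2 ^ j + i)) (a (2 ^ j + i)%nat)) (Cpow z i).

Lemma block_pattern_bit_sign_sum a j k z :
  block_pattern a j k z =
  (bit_sign_sum (rev_pad (2 ^ j) (fun i => fst (block_term a j z i))) (2 ^ j + 2 ^ j) k,
   bit_sign_sum (rev_pad (2 ^ j) (fun i => snd (block_term a j z i))) (2 ^ j + 2 ^ j) k).
Proof.
  rewrite <- !rev_pad_bit_sign_sum. rewrite (surjective_pairing (block_pattern a j k z)).
  unfold block_pattern. rewrite csum_fst, csum_snd. f_equal; apply rsum_ext; intros i _;
    unfold block_term; destruct (a (2 ^ j + i)%nat), (Cpow z i); unfold Cmul, Cscale; simpl; ring.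
Qed.

Lemma block_term_energy_le a j z (part : Cx -> R) : Cnorm z <= 1 ->
  (forall w, part w ^ 2 <= Cnorm w ^ 2) ->
  rsum (fun i => rev_pad (2 ^ j) (fun i => part (block_term a j z i)) i ^ 2) (2 ^ j + 2 ^ j)
  <= block_var a j.
Proof.
  intros Hz Hpart. rewrite rev_pad_sq. unfold block_var, block_energy.
  assert (0 < (/ 4) ^ j) by (apply pow_lt; lra).
  enough (rsum (fun i => part (block_term a j z i) ^ 2) (2 ^ j)
          <= rsum (fun i => (INR (2 ^ j + i) * Cnorm (a (2 ^ j + i)%nat)) ^ 2) (2 ^ j)) by lra.
  apply rsum_le. intros i Hi. eapply Rle_trans; [apply Hpart|]. apply pow_incr.
  split; [apply Cnorm_ge0|]. unfold block_term.
  rewrite Cnorm_mul, Cnorm_scale, Cnorm_pow, Rabs_pos_eq by apply pos_INR.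
  rewrite <- Rmult_1_r. apply Rmult_le_compat_l; [apply Rmult_le_pos; [apply pos_INR|apply Cnorm_ge0]|].
  rewrite <- (pow1 i). apply pow_incr; split; [apply Cnorm_ge0|auto].
Qed.

Lemma count_block_pattern_large a j w : (1 <= j)%nat -> Cnorm w <= 1 ->
  rsum (fun k => if Rle_dec (block_level a j) (Cnorm (block_pattern a j k w)) then 1 else 0)
       (2 ^ (2 ^ j + 2 ^ j))
  <= 4 * (2 ^ (2 ^ j + 2 ^ j) * (/ 256) ^ j).
Proof.
  intros Hj Hw. pose proof (block_var_pos a j) as HV.
  assert (Hj' : 1 <= INR j) by (apply (le_INR 1); auto).
  set (c := sqrt (16 * INR j * block_var a j)).
  assert (Hlevel : block_level a j = sqrt 2 * c).
  { unfold block_level, c. rewrite <- sqrt_mult by nra. f_equal; ring. }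
  assert (Hc2 : c ^ 2 / (2 * block_var a j) = 8 * INR j)
    by (unfold c; rewrite pow2_sqrt by nra; field; lra).
  assert (Hpart : forall w : Cx, fst w ^ 2 <= Cnorm w ^ 2 /\ snd w ^ 2 <= Cnorm w ^ 2)
    by (intros w'; rewrite Cnorm_sq; split; nra).
  rewrite (rsum_ext _ (fun k => if Rle_dec (sqrt 2 * c)
     (Cnorm (bit_sign_sum (rev_pad (2 ^ j) (fun i => fst (block_term a j w i))) (2 ^ j + 2 ^ j) k,
             bit_sign_sum (rev_pad (2 ^ j) (fun i => snd (block_term a j w i))) (2 ^ j + 2 ^ j) k))
     then 1 else 0)) by (intros k _; rewrite Hlevel, block_pattern_bit_sign_sum; reflexivity).
  eapply Rle_trans.
  - apply count_pair_large; [exact HV|apply sqrt_pos|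
      apply (block_term_energy_le a j w fst)|apply (block_term_energy_le a j w snd)];
      auto; intros; apply Hpart.
  - rewrite Hc2. pose proof (exp_neg_8_le j). pose proof (pow2_pos (2 ^ j + 2 ^ j)).
    apply Rmult_le_compat_l; [lra|]. apply Rmult_le_compat_l; lra.
Qed.

(** * A grid on the closed unit disc *)

Fixpoint rmaxn (f : nat -> R) (n : nat) : R :=
  match n with O => 0 | S m => Rmax (rmaxn f m) (f m) end.

Lemma rmaxn_ge f n i : (i < n)%nat -> f i <= rmaxn f n.
Proof.
  induction n; intros H; [lia|]. simpl. destruct (Nat.eq_dec i n) as [->|]; [apply Rmax_r|].
  eapply Rle_trans; [apply IHn; lia|apply Rmax_l].
Qed.

Lemma rmaxn_lt f n c : 0 < c -> (forall i, (i < n)%nat -> f i < c) -> rmaxn f n < c.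
Proof. induction n; simpl; intros Hc H; auto. apply Rmax_lub_lt; auto. Qed.

Lemma rmaxn_ex f n c : 0 < c -> c <= rmaxn f n -> exists i, (i < n)%nat /\ c <= f i.
Proof.
  intros Hc H. destruct (classic (exists i, (i < n)%nat /\ c <= f i)) as [|N]; auto.
  exfalso. assert (rmaxn f n < c); [|lra]. apply rmaxn_lt; auto. intros i Hi.
  destruct (Rlt_le_dec (f i) c); auto. exfalso; apply N; exists i; auto.
Qed.

Definition clip (w : Cx) : Cx := if Rle_dec (Cnorm w) 1 then w else C0.

Definition grid_scale (j : nat) : nat := (8 ^ j)%nat.
Definition grid_size (j : nat) : nat := (2 * grid_scale j + 1)%nat.

Definition grid_point (j g : nat) : Cx :=
  let N := INR (grid_scale j) in
  clip ((INR (g / grid_size j) - N) / N, (INR (g mod grid_size j) - N) / N).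

Definition grid_max (a : nat -> Cx) (j k : nat) : R :=
  rmaxn (fun g => Cnorm (block_pattern a j k (grid_point j g))) (grid_size j * grid_size j).

Lemma Cnorm_clip w : Cnorm (clip w) <= 1.
Proof. unfold clip; destruct Rle_dec; auto. rewrite Cnorm_C0; lra. Qed.

Lemma INR_grid_scale j : INR (grid_scale j) = 8 ^ j.
Proof. unfold grid_scale. rewrite pow_INR. simpl. f_equal; ring. Qed.

Lemma grid_size_sq_le j : INR (grid_size j * grid_size j) <= 9 * 64 ^ j.
Proof.
  unfold grid_size. rewrite mult_INR, plus_INR, mult_INR, INR_grid_scale. simpl INR.
  assert (1 <= 8 ^ j) by (apply pow_R1_Rle; lra).
  replace (64 ^ j) with (8 ^ j * 8 ^ j) by (rewrite <- Rpow_mult_distr; f_equal; ring). nra.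
Qed.

Lemma count_grid_max_large a j : (1 <= j)%nat ->
  rsum (fun k => if Rle_dec (block_level a j) (grid_max a j k) then 1 else 0) (2 ^ (2 ^ j + 2 ^ j))
  <= 36 * (2 ^ (2 ^ j + 2 ^ j) * (/ 4) ^ j).
Proof.
  intros Hj. set (L := (2 ^ j + 2 ^ j)%nat). eapply Rle_trans.
  - apply (rsum_count_le_cover _ (fun g k => block_level a j <= Cnorm (block_pattern a j k (grid_point j g)))
             (fun k => Rle_dec _ _) (fun g k => Rle_dec _ _)).
    intros k Hk. apply rmaxn_ex in Hk; [exact Hk|apply block_level_pos; auto].
  - eapply Rle_trans; [apply rsum_le; intros g _; apply count_block_pattern_large; auto; apply Cnorm_clip|].
    rewrite rsum_const.
    assert (0 <= 4 * (2 ^ L * (/ 256) ^ j)) by (apply Rmult_le_pos; [lra|apply Rmult_le_pos; apply pow_le; lra]).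
    apply Rle_trans with (9 * 64 ^ j * (4 * (2 ^ L * (/ 256) ^ j)));
      [apply Rmult_le_compat_r; auto; apply grid_size_sq_le|].
    replace ((/ 4) ^ j) with (64 ^ j * (/ 256) ^ j) by (rewrite <- Rpow_mult_distr; f_equal; field).
    right; ring.
Qed.

Lemma grid_coord_approx_nonneg (N : nat) x : (1 <= N)%nat -> 0 <= x <= 1 ->
  exists m, (m <= N)%nat /\ INR m / INR N <= x /\ x - INR m / INR N <= 1 / INR N.
Proof.
  intros HN Hx. assert (HNr : 1 <= INR N) by (apply (le_INR 1); auto).
  destruct (nat_floor_ex (x * INR N)) as [m [Hm1 Hm2]]; [nra|].
  exists m. split; [|split].
  - apply INR_le. nra.
  - apply Rmult_le_reg_r with (INR N); [lra|].
    unfold Rdiv; rewrite Rmult_assoc, Rinv_l, Rmult_1_r by lra. lra.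
  - apply Rmult_le_reg_r with (INR N); [lra|].
    replace ((x - INR m / INR N) * INR N) with (x * INR N - INR m) by (field; lra).
    replace (1 / INR N * INR N) with 1 by (field; lra). lra.
Qed.

Lemma grid_coord_approx (N : nat) x : (1 <= N)%nat -> -1 <= x <= 1 ->
  exists p, (p <= 2 * N)%nat /\ Rabs ((INR p - INR N) / INR N) <= Rabs x /\
            Rabs (x - (INR p - INR N) / INR N) <= 1 / INR N.
Proof.
  intros HN Hx. assert (HNr : 1 <= INR N) by (apply (le_INR 1); auto).
  assert (Hmn : forall m, 0 <= INR m / INR N)
    by (intros m; apply Rmult_le_pos; [apply pos_INR|left; apply Rinv_0_lt_compat; lra]).
  destruct (Rle_dec 0 x) as [Hp|Hn].
  - destruct (grid_coord_approx_nonneg N x HN ltac:(lra)) as [m [Hm [Hm1 Hm2]]].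
    exists (N + m)%nat. rewrite plus_INR.
    replace ((INR N + INR m - INR N) / INR N) with (INR m / INR N) by (field; lra).
    split; [lia|]. specialize (Hmn m).
    rewrite (Rabs_pos_eq x), Rabs_pos_eq, Rabs_pos_eq; lra.
  - destruct (grid_coord_approx_nonneg N (- x) HN ltac:(lra)) as [m [Hm [Hm1 Hm2]]].
    exists (N - m)%nat. rewrite minus_INR by auto.
    replace ((INR N - INR m - INR N) / INR N) with (- (INR m / INR N)) by (field; lra).
    split; [lia|]. specialize (Hmn m).
    rewrite (Rabs_left x), Rabs_Ropp, Rabs_pos_eq, Rabs_left1; lra.
Qed.

Lemma grid_point_near j z : Cnorm z <= 1 ->
  exists g, (g < grid_size j * grid_size j)%nat /\
            Cnorm (Csub z (grid_point j g)) <= 2 / INR (grid_scale j).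
Proof.
  intros Hz. destruct z as [x y].
  assert (HN : (1 <= grid_scale j)%nat) by (unfold grid_scale; apply Nat.neq_0_lt_0, Nat.pow_nonzero; lia).
  set (N := grid_scale j) in *. assert (HNr : 1 <= INR N) by (apply (le_INR 1); auto).
  pose proof (Cnorm_fst (x, y)) as Hx. pose proof (Cnorm_snd (x, y)) as Hy. simpl in Hx, Hy.
  pose proof (Rle_abs x); pose proof (Rabs_maj2 x); pose proof (Rle_abs y); pose proof (Rabs_maj2 y).
  destruct (grid_coord_approx N x HN ltac:(lra)) as [p [Hp [Hp1 Hp2]]].
  destruct (grid_coord_approx N y HN ltac:(lra)) as [q [Hq [Hq1 Hq2]]].
  set (G := grid_size j). assert (HG : (p < G /\ q < G)%nat) by (unfold G, grid_size; fold N; lia).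
  exists (p * G + q)%nat. split; [nia|].
  assert (Hgq : ((p * G + q) / G = p)%nat /\ ((p * G + q) mod G = q)%nat).
  { split.
    - rewrite Nat.div_add_l by lia. rewrite Nat.div_small; lia.
    - rewrite Nat.add_comm, Nat.Div0.mod_add. apply Nat.mod_small. lia. }
  set (z' := ((INR p - INR N) / INR N, (INR q - INR N) / INR N)).
  assert (Hz' : Cnorm z' <= 1).
  { apply Rle_trans with (Cnorm (x, y)); auto. unfold Cnorm, z'; cbn [fst snd].
    apply sqrt_le_1_alt. rewrite <- (pow2_abs x), <- (pow2_abs y).
    rewrite <- (pow2_abs ((INR p - INR N) / INR N)), <- (pow2_abs ((INR q - INR N) / INR N)).
    pose proof (Rabs_pos ((INR p - INR N) / INR N)). pose proof (Rabs_pos ((INR q - INR N) / INR N)).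
    apply Rplus_le_compat; apply pow_incr; auto. }
  assert (Hgp : grid_point j (p * G + q) = z').
  { unfold grid_point. fold N G. destruct Hgq as [-> ->]. unfold clip.
    destruct Rle_dec; [auto|contradiction]. }
  rewrite Hgp. eapply Rle_trans; [apply Cnorm_le_abs_sum|]. unfold Csub, z'; simpl.
  replace (2 / INR N) with (1 / INR N + 1 / INR N) by (field; lra). lra.
Qed.

(* Off the bad patterns, the block is controlled on the whole closed disc: it is small at
   the grid points and moves by at most [2 sqrt V_j] between neighbouring ones. *)
Lemma block_le_bound a t j k : (1 <= j)%nat ->
  INR k / 2 ^ (2 ^ S j) < t < (INR k + 1) / 2 ^ (2 ^ S j) -> grid_max a j k < block_level a j ->
  forall z, Cnorm z <= 1 -> Cnorm (block a t j z) <= block_bound a j.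
Proof.
  intros Hj Ht Hg z Hz.
  destruct (grid_point_near j z Hz) as [g [Hg1 Hg2]]. set (w := grid_point j g) in *.
  assert (Hw : Cnorm w <= 1) by apply Cnorm_clip.
  assert (Hbw : Cnorm (block a t j w) < block_level a j).
  { rewrite (block_eq_pattern a t j k w Ht). eapply Rle_lt_trans; [|apply Hg].
    apply (rmaxn_ge (fun g => Cnorm (block_pattern a j k (grid_point j g)))). auto. }
  pose proof (block_lipschitz a t j z w Hz Hw) as Hlip.
  pose proof (sqrt_pos (block_var a j)).
  assert (Hmesh : 4 ^ j * sqrt (block_var a j) * Cnorm (Csub z w) <= 2 * sqrt (block_var a j)).
  { rewrite INR_grid_scale in Hg2.
    assert (E : 4 ^ j * (2 / 8 ^ j) = 2 * (/ 2) ^ j).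
    { replace 8 with (4 * 2) by ring. rewrite Rpow_mult_distr, pow_inv. field.
      split; apply pow_nonzero; lra. }
    assert ((/ 2) ^ j <= 1) by (rewrite <- (pow1 j); apply pow_incr; lra).
    apply Rle_trans with (sqrt (block_var a j) * (4 ^ j * (2 / 8 ^ j))).
    - rewrite (Rmult_comm (4 ^ j)), Rmult_assoc. apply Rmult_le_compat_l; auto.
      apply Rmult_le_compat_l; auto. apply pow_le; lra.
    - rewrite E. nra. }
  pose proof (Cnorm_sub_tri (block a t j z) (block a t j w)). unfold block_bound. lra.
Qed.

(** * The maximum modulus of the derivative *)

Lemma fderiv_term_rad_coef a t z k : fderiv_term a t z k = Cmul (rad_coef a t (S k)) (Cpow z k).
Proof. reflexivity. Qed.

Lemma fderiv_term_le a t A z s k : coef_bounded a A -> Cnorm z <= s ->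
  Cnorm (fderiv_term a t z k) <= A * ((INR k + 1) * s ^ k).
Proof.
  intros HA Hz. rewrite fderiv_term_rad_coef, Cnorm_mul, Cnorm_pow.
  pose proof (rad_coef_le a t (S k) A (HA (S k) ltac:(lia))). rewrite S_INR in H.
  assert (Cnorm z ^ k <= s ^ k) by (apply pow_incr; split; [apply Cnorm_ge0|auto]).
  pose proof (Cnorm_ge0 (rad_coef a t (S k))). pose proof (pow_le (Cnorm z) k (Cnorm_ge0 z)).
  replace (A * ((INR k + 1) * s ^ k)) with ((INR k + 1) * A * s ^ k) by ring.
  apply Rmult_le_compat; auto.
Qed.

Lemma rsum_fderiv_term_le a t A z s n : coef_bounded a A -> Cnorm z <= s -> s < 1 ->
  rsum (fun k => Cnorm (fderiv_term a t z k)) n <= A / (1 - s) ^ 2.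
Proof.
  intros HA Hz Hs. pose proof (Cnorm_ge0 z). pose proof (coef_bounded_ge0 a A HA).
  apply Rle_trans with (rsum (fun k => A * ((INR k + 1) * s ^ k)) n);
    [apply rsum_le; intros; apply fderiv_term_le; auto|].
  rewrite rsum_scal. apply Rmult_le_compat_l; auto. apply rsum_lin_geom_le; lra.
Qed.

Lemma fderiv_series_cv a t A z s : coef_bounded a A -> Cnorm z <= s -> s < 1 ->
  exists w, Csum_to (fderiv_term a t z) w.
Proof.
  intros HA Hz Hs.
  assert (HB : forall n, rsum (fun k => Cnorm (fderiv_term a t z k)) n <= A / (1 - s) ^ 2)
    by (intros; eapply rsum_fderiv_term_le; eauto).
  destruct (series_cv_dominated (fun k => fst (fderiv_term a t z k)) _ _
              (fun k => Cnorm_fst _) HB) as [l1 H1].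
  destruct (series_cv_dominated (fun k => snd (fderiv_term a t z k)) _ _
              (fun k => Cnorm_snd _) HB) as [l2 H2].
  exists (l1, l2). split; auto.
Qed.

Lemma fderiv_sum_lipschitz a t A s z z' w w' : coef_bounded a A -> 0 <= s < 1 ->
  Cnorm z <= s -> Cnorm z' <= s ->
  Csum_to (fderiv_term a t z) w -> Csum_to (fderiv_term a t z') w' ->
  Cnorm (Csub w w') <= A * (2 / (1 - s) ^ 3) * Cnorm (Csub z z').
Proof.
  intros HA Hs Hz Hz' Hw Hw'. apply (Csum_to_sub_le _ _ _ _ _ Hw Hw'). intros N.
  rewrite Csub_csum. eapply Rle_trans; [apply Cnorm_csum|]. rewrite rsum_shift.
  pose proof (coef_bounded_ge0 a A HA). pose proof (Cnorm_ge0 (Csub z z')).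
  rewrite !fderiv_term_rad_coef, Csub_Cmul, Cnorm_mul. simpl Cpow.
  replace (Csub C1 C1) with C0 by (unfold Csub, C1, C0; f_equal; simpl; ring).
  rewrite Cnorm_C0, Rmult_0_r, Rplus_0_l.
  apply Rle_trans with
    (rsum (fun p => A * Cnorm (Csub z z') * ((INR p + 1) * (INR p + 2) * s ^ p)) N).
  - apply rsum_le. intros p _. rewrite !fderiv_term_rad_coef, Csub_Cmul, Cnorm_mul.
    pose proof (rad_coef_le a t (S (S p)) A (HA (S (S p)) ltac:(lia))). rewrite !S_INR in H1.
    pose proof (Cpow_S_sub_le z z' s p Hz Hz'). rewrite S_INR in H2.
    apply Rle_trans with ((INR p + 1 + 1) * A * ((INR p + 1) * s ^ p * Cnorm (Csub z z')));
      [apply Rmult_le_compat; auto using Cnorm_ge0|right; ring].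
  - rewrite rsum_scal. pose proof (rsum_quad_geom_le s N Hs).
    replace (A * (2 / (1 - s) ^ 3) * Cnorm (Csub z z'))
      with (A * Cnorm (Csub z z') * (2 / (1 - s) ^ 3)) by ring.
    apply Rmult_le_compat_l; auto. apply Rmult_le_pos; auto.
Qed.

Lemma modset_lub_choice a t r :
  exists m, is_lub (modset a t r) m \/ (~ (exists m', is_lub (modset a t r) m') /\ m = 0).
Proof.
  destruct (classic (exists m', is_lub (modset a t r) m')) as [[m Hm]|H];
    [exists m|exists 0]; auto.
Qed.

(* M_oo(r, f_t'), with the junk value [0] when the supremum does not exist. *)
Definition max_modulus (a : nat -> Cx) (t r : R) : R :=
  proj1_sig (constructive_indefinite_description _ (modset_lub_choice a t r)).

Lemma modset_has_lub a t A r : coef_bounded a A -> 0 <= r < 1 -> exists m, is_lub (modset a t r) m.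
Proof.
  intros HA Hr. destruct (completeness (modset a t r)) as [m Hm]; [| |exists m; exact Hm].
  - exists (A / (1 - r) ^ 2). intros m [z [w [Hz [Hw ->]]]].
    apply (Csum_to_le_subseq _ _ _ (fun n => n) (fun n => Nat.lt_succ_diag_r n) Hw).
    intros N. eapply Rle_trans; [apply Cnorm_csum|]. apply (rsum_fderiv_term_le a t A z r); auto; lra.
  - destruct (fderiv_series_cv a t A (r, 0) r HA) as [w Hw]; [rewrite Cnorm_real; lra|lra|].
    exists (Cnorm w), (r, 0), w. rewrite Cnorm_real by lra. auto.
Qed.

Lemma max_modulus_is_lub a t A r : coef_bounded a A -> 0 <= r < 1 ->
  is_lub (modset a t r) (max_modulus a t r).
Proof.
  intros HA Hr. unfold max_modulus.
  destruct (constructive_indefinite_description _ (modset_lub_choice a t r)) as [m [Hm|[Hn Hm]]];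
    simpl; auto.
  exfalso; apply Hn. eapply modset_has_lub; eauto.
Qed.

Lemma max_modulus_ge a t A r z w : coef_bounded a A -> 0 <= r < 1 -> Cnorm z = r ->
  Csum_to (fderiv_term a t z) w -> Cnorm w <= max_modulus a t r.
Proof. intros HA Hr Hz Hw. apply (max_modulus_is_lub a t A r HA Hr). exists z, w; auto. Qed.

Lemma max_modulus_le a t A r X : coef_bounded a A -> 0 <= r < 1 ->
  (forall z w, Cnorm z = r -> Csum_to (fderiv_term a t z) w -> Cnorm w <= X) ->
  max_modulus a t r <= X.
Proof.
  intros HA Hr H. apply (max_modulus_is_lub a t A r HA Hr).
  intros m [z [w [Hz [Hw ->]]]]. eauto.
Qed.

Lemma max_modulus_ge0 a t A r : coef_bounded a A -> 0 <= r < 1 -> 0 <= max_modulus a t r.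
Proof.
  intros HA Hr.
  destruct (fderiv_series_cv a t A (r, 0) r HA) as [w Hw]; [rewrite Cnorm_real; lra|lra|].
  apply Rle_trans with (Cnorm w); [apply Cnorm_ge0|].
  apply (max_modulus_ge a t A r (r, 0)); auto. apply Cnorm_real; lra.
Qed.

Lemma max_modulus_lipschitz a t A s r r' : coef_bounded a A -> 0 <= s < 1 ->
  0 <= r <= s -> 0 <= r' <= s ->
  max_modulus a t r <= max_modulus a t r' + A * (2 / (1 - s) ^ 3) * Rabs (r - r').
Proof.
  intros HA Hs Hr Hr'. apply (max_modulus_le a t A r _ HA ltac:(lra)). intros z w Hz Hw.
  destruct (Cnorm_rescale z r r' Hz ltac:(lra)) as [z' [Hz'1 Hz'2]].
  destruct (fderiv_series_cv a t A z' s HA) as [w' Hw']; [lra|lra|].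
  pose proof (fderiv_sum_lipschitz a t A s z z' w w' HA Hs ltac:(lra) ltac:(lra) Hw Hw').
  pose proof (max_modulus_ge a t A r' z' w' HA ltac:(lra) Hz'1 Hw').
  pose proof (Cnorm_sub_tri w w').
  assert (0 <= A * (2 / (1 - s) ^ 3)).
  { apply Rmult_le_pos; [eapply coef_bounded_ge0; eauto|].
    apply Rmult_le_pos; [lra|left; apply Rinv_0_lt_compat, pow_lt; lra]. }
  assert (A * (2 / (1 - s) ^ 3) * Cnorm (Csub z z') <= A * (2 / (1 - s) ^ 3) * Rabs (r - r'))
    by (apply Rmult_le_compat_l; auto).
  lra.
Qed.

(* Even extension, so that continuity at [r = 0] is a two-sided statement. *)
Definition max_modulus_abs (a : nat -> Cx) (t r : R) : R := max_modulus a t (Rabs r).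

Lemma continuity_pt_lipschitz f x :
  (exists d K, 0 < d /\ forall y, Rabs (y - x) < d -> Rabs (f y - f x) <= K * Rabs (y - x)) ->
  continuity_pt f x.
Proof.
  intros [d [K [Hd H]]] e He. pose proof (Rabs_pos K).
  exists (Rmin d (e / (Rabs K + 1))). split.
  - apply Rmin_pos; auto. apply Rdiv_lt_0_compat; lra.
  - intros y [_ Hy]. simpl in *. unfold R_dist in *.
    pose proof (Rmin_l d (e / (Rabs K + 1))). pose proof (Rmin_r d (e / (Rabs K + 1))).
    specialize (H y ltac:(lra)). pose proof (Rabs_pos (y - x)). pose proof (Rle_abs K).
    apply Rle_lt_trans with ((Rabs K + 1) * Rabs (y - x)); [nra|].
    apply Rlt_le_trans with ((Rabs K + 1) * (e / (Rabs K + 1))); [apply Rmult_lt_compat_l; lra|].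
    right; field; lra.
Qed.

Lemma max_modulus_abs_continuity a t A x : coef_bounded a A -> Rabs x < 1 ->
  continuity_pt (max_modulus_abs a t) x.
Proof.
  intros HA Hx. apply continuity_pt_lipschitz. set (s := (Rabs x + 1) / 2).
  exists ((1 - Rabs x) / 2), (A * (2 / (1 - s) ^ 3)). split; [lra|].
  intros y Hy. unfold max_modulus_abs.
  pose proof (Rabs_triang_inv2 y x) as Htri. pose proof (Rle_abs (Rabs y - Rabs x)).
  pose proof (Rabs_pos x). pose proof (Rabs_pos y).
  assert (Hs : 0 <= s < 1) by (unfold s; lra).
  assert (Hys : Rabs y <= s) by (unfold s; lra).
  assert (Hxs : Rabs x <= s) by (unfold s; lra).
  pose proof (max_modulus_lipschitz a t A s (Rabs y) (Rabs x) HA Hs ltac:(lra) ltac:(lra)).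
  pose proof (max_modulus_lipschitz a t A s (Rabs x) (Rabs y) HA Hs ltac:(lra) ltac:(lra)).
  rewrite (Rabs_minus_sym (Rabs x)) in H3.
  assert (HK : 0 <= A * (2 / (1 - s) ^ 3)).
  { apply Rmult_le_pos; [eapply coef_bounded_ge0; eauto|].
    apply Rmult_le_pos; [lra|left; apply Rinv_0_lt_compat, pow_lt; lra]. }
  assert (A * (2 / (1 - s) ^ 3) * Rabs (Rabs y - Rabs x) <= A * (2 / (1 - s) ^ 3) * Rabs (y - x))
    by (apply Rmult_le_compat_l; auto).
  apply Rabs_le. lra.
Qed.

Definition weight (r : R) : R := (1 - r) * (ln (1 / (1 - r))) ^ 2.

Lemma weight_continuity x : x < 1 -> continuity_pt weight x.
Proof.
  intros Hx. apply derivable_continuous_pt.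
  assert (H : is_derive weight x
    ((-1) * (ln (1 / (1 - x))) ^ 2 + (1 - x) * (2 * ln (1 / (1 - x)) * (/ (1 - x))))).
  { unfold weight. auto_derive.
    - repeat split; try lra. apply Rdiv_lt_0_compat; lra.
    - replace (1 * / (1 + - x)) with (1 / (1 - x)) by (field; lra). field. lra. }
  apply is_derive_Reals in H. exact (exist _ _ H).
Qed.

Lemma integrand_integrable a t A s : coef_bounded a A -> 0 <= s < 1 ->
  Riemann_integrable (fun r => (1 - r) * (ln (1 / (1 - r))) ^ 2 * (max_modulus_abs a t r) ^ 2) 0 s.
Proof.
  intros HA Hs. apply continuity_implies_RiemannInt; [lra|]. intros x Hx.
  change (continuity_pt (mult_fct weight (mult_fct (max_modulus_abs a t)
           (mult_fct (max_modulus_abs a t) (fct_cte 1)))) x).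
  assert (HM : continuity_pt (max_modulus_abs a t) x)
    by (apply (max_modulus_abs_continuity a t A); auto; rewrite Rabs_pos_eq; lra).
  apply continuity_pt_mult; [apply weight_continuity; lra|].
  apply continuity_pt_mult; auto. apply continuity_pt_mult; auto. apply continuity_pt_const.
  intros u v; auto.
Qed.

(** * Summing over dyadic annuli *)

Definition annulus_edge (k : nat) : R := 1 - (/ 2) ^ k.

Lemma annulus_edge_bounds k : 0 <= annulus_edge k < 1.
Proof.
  unfold annulus_edge. assert (0 < (/ 2) ^ k) by (apply pow_lt; lra).
  assert ((/ 2) ^ k <= 1) by (rewrite <- (pow1 k); apply pow_incr; lra). lra.
Qed.

Lemma annulus_edge_reach s : 0 <= s < 1 -> exists K, s <= annulus_edge K.
Proof.
  intros Hs. destruct (pow_lt_1_zero (/ 2) ltac:(rewrite Rabs_pos_eq; lra) (1 - s) ltac:(lra)) as [K HK].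
  exists K. specialize (HK K (Nat.le_refl K)).
  rewrite Rabs_pos_eq in HK by (apply pow_le; lra). unfold annulus_edge; lra.
Qed.

Lemma RiemannInt_le_annuli (G : R -> R) (c : nat -> R) :
  (forall x, 0 <= x < 1 -> 0 <= G x) ->
  (forall k x, annulus_edge k <= x <= annulus_edge (S k) -> G x <= c k) ->
  forall K s (pr : Riemann_integrable G 0 s), 0 <= s <= annulus_edge K ->
  RiemannInt pr <= rsum (fun k => c k * (/ 2) ^ (S k)) K.
Proof.
  intros HG Hc. pose proof annulus_edge_bounds as Hpp.
  assert (Hpk : forall k, annulus_edge (S k) - annulus_edge k = (/ 2) ^ S k)
    by (intros; unfold annulus_edge; simpl; field).
  assert (Hc0 : forall k, 0 <= c k).
  { intros k. apply Rle_trans with (G (annulus_edge k)); [apply HG; auto|apply Hc].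
    specialize (Hpk k). assert (0 < (/ 2) ^ S k) by (apply pow_lt; lra). lra. }
  induction K; intros s pr Hs.
  - unfold annulus_edge in Hs; simpl in Hs. assert (s = 0) by lra. subst s.
    rewrite RiemannInt_P9. simpl; lra.
  - cbn [rsum]. assert (0 <= c K * (/ 2) ^ S K) by (apply Rmult_le_pos; auto; apply pow_le; lra).
    specialize (Hpp K). destruct (Rle_dec s (annulus_edge K)) as [Hle|Hgt].
    + specialize (IHK s pr ltac:(lra)). lra.
    + assert (pr1 : Riemann_integrable G 0 (annulus_edge K)) by (apply RiemannInt_P22 with s; auto; lra).
      assert (pr2 : Riemann_integrable G (annulus_edge K) s) by (apply RiemannInt_P23 with 0; auto; lra).
      rewrite <- (RiemannInt_P26 pr1 pr2 pr). specialize (IHK (annulus_edge K) pr1 ltac:(lra)).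
      assert (RiemannInt pr2 <= RiemannInt (RiemannInt_P14 (annulus_edge K) s (c K))).
      { apply RiemannInt_P19; [lra|]. intros x Hx. unfold fct_cte. apply Hc. lra. }
      rewrite RiemannInt_P15 in H0. specialize (Hpk K).
      assert (c K * (s - annulus_edge K) <= c K * (/ 2) ^ S K) by (apply Rmult_le_compat_l; auto; lra).
      lra.
Qed.

(* [radius_weight k j] bounds [|z|^(2^j - 1)] on the [k]-th annulus. *)
Definition radius_weight (k j : nat) : R := annulus_edge (S k) ^ (2 ^ j - 1).

Definition annulus_weight (k : nat) : R := (/ 2) ^ (2 * k + 1) * (INR k + 1) ^ 2.

Lemma annulus_weight_pos k : 0 < annulus_weight k.
Proof. unfold annulus_weight. apply Rmult_lt_0_compat; [apply pow_lt; lra|pose proof (pos_INR k); nra]. Qed.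

Lemma radius_weight_ge0 k j : 0 <= radius_weight k j.
Proof. unfold radius_weight. apply pow_le. apply annulus_edge_bounds. Qed.

Lemma radius_weight_le_1 k j : radius_weight k j <= 1.
Proof. unfold radius_weight. rewrite <- (pow1 (2 ^ j - 1)). apply pow_incr. pose proof (annulus_edge_bounds (S k)); lra. Qed.

Lemma radius_weight_le k j : radius_weight k j <= 64 * 4 ^ k * (/ 4) ^ j.
Proof.
  pose proof (annulus_edge_bounds (S k)) as Hr. unfold radius_weight.
  destruct (le_lt_dec j 1) as [Hj|Hj].
  - eapply Rle_trans; [apply radius_weight_le_1|]. assert (1 <= 4 ^ k) by (apply pow_R1_Rle; lra).
    assert ((/ 4) ^ j >= / 4) by (destruct j as [|[|]]; simpl; lra || lia). nra.
  - set (m := (2 ^ (j - 2))%nat). assert (Hm : (2 * m <= 2 ^ j - 1)%nat).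
    { unfold m. replace j with (2 + (j - 2))%nat at 2 by lia. rewrite Nat.pow_add_r.
      pose proof (pow2_ge1 (j - 2)). simpl. lia. }
    apply Rle_trans with (annulus_edge (S k) ^ (2 * m)).
    { replace (2 ^ j - 1)%nat with (2 * m + (2 ^ j - 1 - 2 * m))%nat by lia. rewrite pow_add.
      rewrite <- (Rmult_1_r (annulus_edge (S k) ^ (2 * m))) at 2.
      apply Rmult_le_compat_l; [apply pow_le; lra|].
      rewrite <- (pow1 (2 ^ j - 1 - 2 * m)). apply pow_incr; lra. }
    set (x := (/ 2) ^ S k).
    assert (Hx : 0 < x <= 1)
      by (unfold x; split; [apply pow_lt; lra|rewrite <- (pow1 (S k)); apply pow_incr; lra]).
    pose proof (pow_one_sub_mul_le x m ltac:(lra)). unfold annulus_edge; fold x.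
    assert (Hmx : INR m * x = 2 ^ (j - 2) * (/ 2) ^ S k) by (unfold m; rewrite INR_pow2; auto).
    assert (0 < INR m * x) by (rewrite Hmx; apply Rmult_lt_0_compat; [apply pow2_pos|apply pow_lt; lra]).
    assert (Hp : 0 <= (1 - x) ^ m) by (apply pow_le; lra).
    assert (Hq : (1 - x) ^ m <= / (INR m * x))
      by (apply Rmult_le_reg_r with (INR m * x); auto; rewrite Rinv_l by lra; nra).
    replace (2 * m)%nat with (m + m)%nat by lia. rewrite pow_add.
    apply Rle_trans with (/ (INR m * x) * / (INR m * x)); [apply Rmult_le_compat; auto|].
    rewrite Hmx. replace ((/ 4) ^ j) with ((/ 2) ^ (j - 2) * (/ 2) ^ (j - 2) * (/ 4) ^ 2)
      by (rewrite <- Rpow_mult_distr; replace (/ 2 * / 2) with (/ 4) by field;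
          rewrite <- pow_add; f_equal; lia).
    replace (4 ^ k) with (2 ^ k * 2 ^ k) by (rewrite <- Rpow_mult_distr; f_equal; lra).
    rewrite !pow_inv. replace (2 ^ S k) with (2 * 2 ^ k) by (simpl; ring).
    right. field. split; apply pow_nonzero; lra.
Qed.

Lemma rsum_le_split (f g h : nat -> R) H j K :
  (forall k, (k < j)%nat -> f k <= g k) -> (forall k, (j <= k)%nat -> f k <= h (k - j)%nat) ->
  (forall k, 0 <= g k) -> (forall i, 0 <= h i) -> (forall n, rsum h n <= H) ->
  rsum f K <= rsum g j + H.
Proof.
  intros Hg Hh Hg0 Hh0 HH.
  apply Rle_trans with (rsum (fun k => (if Nat.ltb k j then g k else 0)
                                      + (if Nat.ltb k j then 0 else h (k - j)%nat)) K).
  - apply rsum_le. intros k _. destruct (Nat.ltb_spec k j).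
    + rewrite Rplus_0_r. auto.
    + rewrite Rplus_0_l. auto.
  - rewrite rsum_plus. pose proof (rsum_prefix_le g j K Hg0).
    pose proof (rsum_shifted_le h j K H Hh0 HH). lra.
Qed.

Lemma rsum_radius_weight_le k J : rsum (fun j => radius_weight k j / (/ 2) ^ j) J <= 129 * 2 ^ k.
Proof.
  pose proof (pow2_pos k).
  eapply Rle_trans.
  - apply (rsum_le_split _ (fun j => 2 ^ j) (fun i => 64 * 2 ^ k * (/ 2) ^ i) (128 * 2 ^ k) k J).
    + intros j Hj. unfold Rdiv. rewrite pow_inv, Rinv_inv.
      pose proof (radius_weight_le_1 k j). pose proof (radius_weight_ge0 k j). pose proof (pow2_pos j). nra.
    + intros j Hj. unfold Rdiv. rewrite pow_inv, Rinv_inv.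
      pose proof (radius_weight_le k j). pose proof (pow2_pos j).
      replace (64 * 2 ^ k * (/ 2) ^ (j - k)) with (64 * 4 ^ k * (/ 4) ^ j * 2 ^ j); [nra|].
      rewrite !pow_inv. replace (4 ^ k) with (2 ^ k * 2 ^ k) by (rewrite <- Rpow_mult_distr; f_equal; lra).
      replace (4 ^ j) with (2 ^ j * 2 ^ j) by (rewrite <- Rpow_mult_distr; f_equal; lra).
      replace (2 ^ j) with (2 ^ k * 2 ^ (j - k)) by (rewrite <- pow_add; f_equal; lia).
      field. split; apply pow_nonzero; lra.
    + intros; apply pow_le; lra.
    + intros; apply Rmult_le_pos; [lra|apply pow_le; lra].
    + intros n. rewrite rsum_scal, rsum_geom_half. pose proof (pow_lt (/ 2) n ltac:(lra)).
      assert (0 <= 2 ^ k * (/ 2) ^ n) by (apply Rmult_le_pos; lra). nra.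
  - rewrite rsum_pow2. lra.
Qed.

Lemma annulus_weight_mul_pow2 k : annulus_weight k * (129 * 2 ^ k) = 129 / 2 * (INR k + 1) ^ 2 * (/ 2) ^ k.
Proof.
  unfold annulus_weight. rewrite pow_add, pow_mult, !pow_inv. replace (2 ^ 2) with 4 by (simpl; ring).
  replace (4 ^ k) with (2 ^ k * 2 ^ k) by (rewrite <- Rpow_mult_distr; f_equal; lra).
  simpl. field. apply pow_nonzero; lra.
Qed.

Lemma annulus_radius_term_low j k : (k < j)%nat ->
  annulus_weight k * (129 * 2 ^ k) * radius_weight k j
  <= 129 / 2 * 64 * (INR j + 1) ^ 2 * (/ 4) ^ j * 2 ^ k.
Proof.
  intros Hk. rewrite annulus_weight_mul_pow2. pose proof (radius_weight_le k j).
  pose proof (pos_INR k). pose proof (pow_le (/ 4) j ltac:(lra)). pose proof (pow2_pos k).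
  assert ((INR k + 1) ^ 2 <= (INR j + 1) ^ 2)
    by (apply pow_incr; split; [lra|]; apply Rplus_le_compat_r, le_INR; lia).
  assert (Hk4 : (/ 2) ^ k * (64 * 4 ^ k * (/ 4) ^ j) = 64 * (/ 4) ^ j * 2 ^ k).
  { replace (4 ^ k) with (2 ^ k * 2 ^ k) by (rewrite <- Rpow_mult_distr; f_equal; lra).
    rewrite pow_inv. field. apply pow_nonzero; lra. }
  apply Rle_trans with (129 / 2 * (INR k + 1) ^ 2 * ((/ 2) ^ k * (64 * 4 ^ k * (/ 4) ^ j))).
  { rewrite <- Rmult_assoc. apply Rmult_le_compat_l; auto.
    apply Rmult_le_pos; [apply Rmult_le_pos; [lra|apply pow2_ge_0]|apply pow_le; lra]. }
  rewrite Hk4. assert (0 <= 64 * (/ 4) ^ j * 2 ^ k) by (apply Rmult_le_pos; [apply Rmult_le_pos|]; lra).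
  replace (129 / 2 * 64 * (INR j + 1) ^ 2 * (/ 4) ^ j * 2 ^ k)
    with (129 / 2 * (INR j + 1) ^ 2 * (64 * (/ 4) ^ j * 2 ^ k)) by ring.
  apply Rmult_le_compat_r; auto. lra.
Qed.

Lemma annulus_radius_term_high j k : (j <= k)%nat ->
  annulus_weight k * (129 * 2 ^ k) * radius_weight k j
  <= 129 / 2 * (INR j + 1) ^ 2 * (/ 2) ^ j * ((INR (k - j) + 1) ^ 2 * (/ 2) ^ (k - j)).
Proof.
  intros Hk. rewrite annulus_weight_mul_pow2. pose proof (radius_weight_le_1 k j).
  pose proof (radius_weight_ge0 k j). pose proof (pos_INR j).
  set (i := (k - j)%nat). assert (Hki : INR k = INR j + INR i) by (unfold i; rewrite <- plus_INR; f_equal; lia).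
  pose proof (pos_INR i).
  assert ((INR k + 1) ^ 2 <= (INR j + 1) ^ 2 * (INR i + 1) ^ 2)
    by (rewrite <- Rpow_mult_distr; apply pow_incr; split; [lra|]; rewrite Hki; nra).
  assert (E2 : (/ 2) ^ k = (/ 2) ^ j * (/ 2) ^ i) by (rewrite <- pow_add; f_equal; unfold i; lia).
  assert (0 <= 129 / 2 * (INR k + 1) ^ 2 * (/ 2) ^ k)
    by (apply Rmult_le_pos; [apply Rmult_le_pos; [lra|apply pow2_ge_0]|apply pow_le; lra]).
  apply Rle_trans with (129 / 2 * (INR k + 1) ^ 2 * (/ 2) ^ k); [nra|].
  rewrite E2. pose proof (pow_le (/ 2) i ltac:(lra)). pose proof (pow_le (/ 2) j ltac:(lra)).
  assert (0 <= (/ 2) ^ j * (/ 2) ^ i) by (apply Rmult_le_pos; auto).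
  replace (129 / 2 * (INR j + 1) ^ 2 * (/ 2) ^ j * ((INR i + 1) ^ 2 * (/ 2) ^ i))
    with (129 / 2 * ((INR j + 1) ^ 2 * (INR i + 1) ^ 2) * ((/ 2) ^ j * (/ 2) ^ i)) by ring.
  apply Rmult_le_compat_r; auto. lra.
Qed.

Lemma rsum_annulus_radius_weight_le j K :
  rsum (fun k => annulus_weight k * (129 * 2 ^ k) * radius_weight k j) K
  <= 5000 * ((INR j + 1) ^ 2 * (/ 2) ^ j).
Proof.
  set (C1 := 129 / 2 * 64 * (INR j + 1) ^ 2 * (/ 4) ^ j).
  set (C2 := 129 / 2 * (INR j + 1) ^ 2 * (/ 2) ^ j).
  pose proof (pow2_ge_0 (INR j + 1)). pose proof (pow_le (/ 4) j ltac:(lra)).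
  pose proof (pow_le (/ 2) j ltac:(lra)).
  assert (HC1 : 0 <= C1) by (unfold C1; apply Rmult_le_pos; [lra|auto]).
  assert (HC2 : 0 <= C2) by (unfold C2; apply Rmult_le_pos; [lra|auto]).
  eapply Rle_trans.
  - apply (rsum_le_split _ (fun k => C1 * 2 ^ k) (fun i => C2 * ((INR i + 1) ^ 2 * (/ 2) ^ i))
             (C2 * 12) j K).
    + intros k Hk. apply annulus_radius_term_low; auto.
    + intros k Hk. apply annulus_radius_term_high; auto.
    + intros k. apply Rmult_le_pos; [auto|apply pow_le; lra].
    + intros i. apply Rmult_le_pos; [auto|apply Rmult_le_pos; [apply pow2_ge_0|apply pow_le; lra]].
    + intros n. rewrite rsum_scal. apply Rmult_le_compat_l; auto. apply rsum_sq_half_le.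
  - rewrite rsum_scal, rsum_pow2.
    assert (Ej : (/ 4) ^ j * 2 ^ j = (/ 2) ^ j).
    { replace (/ 4) with (/ 2 * / 2) by field. rewrite Rpow_mult_distr, !pow_inv. field.
      apply pow_nonzero; lra. }
    assert (C1 * (2 ^ j - 1) <= C1 * 2 ^ j) by (apply Rmult_le_compat_l; lra).
    assert (C1 * 2 ^ j = 129 * 32 * ((INR j + 1) ^ 2 * (/ 2) ^ j)) by (unfold C1; rewrite <- Ej; field).
    assert (C2 * 12 = 129 / 2 * 12 * ((INR j + 1) ^ 2 * (/ 2) ^ j)) by (unfold C2; field).
    assert (0 <= (INR j + 1) ^ 2 * (/ 2) ^ j) by (apply Rmult_le_pos; auto). lra.
Qed.

Lemma cauchy_schwarz_weighted (b m c : nat -> R) n : (forall j, 0 < c j) -> (forall j, 0 <= m j) ->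
  (rsum (fun j => b j * m j) n) ^ 2
  <= rsum (fun j => b j ^ 2 * c j * m j) n * rsum (fun j => m j / c j) n.
Proof.
  intros Hc Hm. set (f := fun i => b i ^ 2 * c i * m i). set (g := fun j => m j / c j).
  replace ((rsum (fun j => b j * m j) n) ^ 2)
    with (rsum (fun j => b j * m j) n * rsum (fun j => b j * m j) n) by ring.
  rewrite !rsum_prod.
  apply Rle_trans with (rsum (fun i => rsum (fun j => / 2 * (f i * g j) + / 2 * (f j * g i)) n) n).
  - apply rsum_le; intros i _; apply rsum_le; intros j _. unfold f, g.
    specialize (Hc i) as Hci. specialize (Hc j) as Hcj. specialize (Hm i) as Hmi. specialize (Hm j) as Hmj.
    assert (0 <= m i * m j / (c i * c j)) by (apply Rmult_le_pos; [nra|left; apply Rinv_0_lt_compat; nra]).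
    assert (0 <= (b i * c i - b j * c j) ^ 2 * (m i * m j / (c i * c j)))
      by (apply Rmult_le_pos; auto; apply pow2_ge_0).
    assert (/ 2 * (b i ^ 2 * c i * m i * (m j / c j)) + / 2 * (b j ^ 2 * c j * m j * (m i / c i))
            - b i * m i * (b j * m j)
            = / 2 * ((b i * c i - b j * c j) ^ 2 * (m i * m j / (c i * c j)))) by (field; lra).
    lra.
  - rewrite (rsum_ext _ (fun i => / 2 * rsum (fun j => f i * g j) n + / 2 * rsum (fun j => f j * g i) n))
      by (intros i _; rewrite <- !rsum_scal, <- rsum_plus; auto).
    rewrite rsum_plus, !rsum_scal, (rsum_swap (fun i j => f j * g i)). lra.
Qed.

Section AnnulusMajorant.

Variable b : nat -> R.
Variable B : R.
Hypothesis b_ge0 : forall j, 0 <= b j.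
Hypothesis b_sq_sum : forall J, rsum (fun j => b j ^ 2 * (/ 4) ^ j * (INR j + 1) ^ 2) J <= B.

(* [annulus_sum k J] bounds the first [2^J - 1] terms of the series on the [k]-th annulus. *)
Let annulus_sum (k J : nat) : R := rsum (fun j => b j * radius_weight k j) J.

Lemma annulus_sum_ge0 k J : 0 <= annulus_sum k J.
Proof. apply rsum_nonneg; intros; apply Rmult_le_pos; auto; apply radius_weight_ge0. Qed.

(* Weighted Cauchy-Schwarz with weights [2^(-j)], then exchange of the two sums. *)
Lemma rsum_annulus_sum_sq_le K J : rsum (fun k => annulus_weight k * annulus_sum k J ^ 2) K <= 5000 * B.
Proof.
  apply Rle_trans with (rsum (fun k => rsum (fun j => b j ^ 2 * (/ 2) ^ j
                          * (annulus_weight k * (129 * 2 ^ k) * radius_weight k j)) J) K).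
  - apply rsum_le. intros k _.
    pose proof (cauchy_schwarz_weighted b (fun j => radius_weight k j) (fun j => (/ 2) ^ j) J
                  (fun j => pow_lt (/ 2) j ltac:(lra)) (fun j => radius_weight_ge0 k j)) as Hcs.
    pose proof (rsum_radius_weight_le k J).
    assert (0 <= rsum (fun j => b j ^ 2 * (/ 2) ^ j * radius_weight k j) J).
    { apply rsum_nonneg; intros; apply Rmult_le_pos; [apply Rmult_le_pos; [apply pow2_ge_0|apply pow_le; lra]|].
      apply radius_weight_ge0. }
    rewrite (rsum_ext _ (fun j => (annulus_weight k * (129 * 2 ^ k)) * (b j ^ 2 * (/ 2) ^ j * radius_weight k j)))
      by (intros; ring).
    rewrite rsum_scal. pose proof (annulus_weight_pos k). pose proof (pow2_pos k).
    apply Rle_trans with (annulus_weight k * (rsum (fun j => b j ^ 2 * (/ 2) ^ j * radius_weight k j) J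
                                              * (129 * 2 ^ k))); [|right; ring].
    apply Rmult_le_compat_l; [lra|]. eapply Rle_trans; [apply Hcs|]. apply Rmult_le_compat_l; auto.
  - rewrite rsum_swap.
    apply Rle_trans with (rsum (fun j => 5000 * (b j ^ 2 * (/ 4) ^ j * (INR j + 1) ^ 2)) J).
    + apply rsum_le. intros j _. rewrite rsum_scal. pose proof (rsum_annulus_radius_weight_le j K).
      assert (0 <= b j ^ 2 * (/ 2) ^ j) by (apply Rmult_le_pos; [apply pow2_ge_0|apply pow_le; lra]).
      apply Rle_trans with (b j ^ 2 * (/ 2) ^ j * (5000 * ((INR j + 1) ^ 2 * (/ 2) ^ j)));
        [apply Rmult_le_compat_l; auto|].
      right. replace (/ 4) with (/ 2 * / 2) by field. rewrite Rpow_mult_distr. ring.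
    + rewrite rsum_scal. apply Rmult_le_compat_l; [lra|auto].
Qed.

Lemma annulus_majorant_ex : exists X : nat -> R,
  (forall k J, annulus_sum k J <= X k) /\
  (forall K, rsum (fun k => annulus_weight k * X k ^ 2) K <= 5000 * B).
Proof.
  assert (Hincr : forall k, Un_growing (annulus_sum k)).
  { intros k J. unfold annulus_sum. simpl. pose proof (b_ge0 J). pose proof (radius_weight_ge0 k J). nra. }
  assert (HX : forall k, {x | Un_cv (annulus_sum k) x}).
  { intros k. apply growing_cv; auto.
    exists (1 + 5000 * B / annulus_weight k). intros y [J ->].
    pose proof (annulus_weight_pos k) as Hw. pose proof (annulus_sum_ge0 k J).
    assert (annulus_weight k * annulus_sum k J ^ 2 <= 5000 * B).
    { eapply Rle_trans; [|apply (rsum_annulus_sum_sq_le (S k) J)].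
      apply (rsum_term_le (fun k => annulus_weight k * annulus_sum k J ^ 2)); [|lia].
      intros; apply Rmult_le_pos; [left; apply annulus_weight_pos|apply pow2_ge_0]. }
    assert (annulus_sum k J ^ 2 <= 5000 * B / annulus_weight k)
      by (apply Rmult_le_reg_l with (annulus_weight k); auto; field_simplify; lra).
    simpl in *. nra. }
  exists (fun k => proj1_sig (HX k)). split.
  - intros k J. destruct (HX k) as [x Hx]. simpl. apply (growing_ineq (annulus_sum k)); auto.
  - intros K.
    assert (Hc : is_lim_seq (fun J => rsum (fun k => annulus_weight k * annulus_sum k J ^ 2) K)
                            (rsum (fun k => annulus_weight k * proj1_sig (HX k) ^ 2) K)).
    { apply (is_lim_seq_rsum (fun k J => annulus_weight k * annulus_sum k J ^ 2)). intros k.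
      destruct (HX k) as [x Hx]. simpl. apply is_lim_seq_Reals in Hx.
      apply is_lim_seq_mult'; [apply is_lim_seq_const|].
      simpl. apply is_lim_seq_mult'; auto. apply is_lim_seq_mult'; auto. apply is_lim_seq_const. }
    pose proof (is_lim_seq_le _ _ _ _ (fun J => rsum_annulus_sum_sq_le K J) Hc
                  (is_lim_seq_const (5000 * B))). simpl in H. auto.
Qed.

End AnnulusMajorant.

Lemma csum_fderiv_block a t z j :
  csum (fun i => fderiv_term a t z (2 ^ j - 1 + i)%nat) (2 ^ j)
  = Cmul (Cpow z (2 ^ j - 1)) (block a t j z).
Proof.
  unfold block. rewrite Cmul_csum. apply csum_ext. intros i Hi. rewrite fderiv_term_rad_coef.
  pose proof (pow2_ge1 j). replace (S (2 ^ j - 1 + i)) with (2 ^ j + i)%nat by lia.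
  rewrite Cpow_add, Cmul_assoc, (Cmul_comm (rad_coef a t _)), <- Cmul_assoc. auto.
Qed.

Lemma fderiv_partial_le a t (b : nat -> R) q z J : 0 <= q <= 1 -> Cnorm z <= q ->
  (forall j z, Cnorm z <= 1 -> Cnorm (block a t j z) <= b j) ->
  Cnorm (csum (fderiv_term a t z) (2 ^ J - 1)) <= rsum (fun j => b j * q ^ (2 ^ j - 1)) J.
Proof.
  intros Hq Hz Hb. rewrite csum_blocks. eapply Rle_trans; [apply Cnorm_csum|].
  apply rsum_le. intros j _. rewrite csum_fderiv_block, Cnorm_mul, Cnorm_pow, Rmult_comm.
  specialize (Hb j z ltac:(lra)).
  assert (Cnorm z ^ (2 ^ j - 1) <= q ^ (2 ^ j - 1)) by (apply pow_incr; split; [apply Cnorm_ge0|auto]).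
  apply Rmult_le_compat; auto using Cnorm_ge0. apply pow_le, Cnorm_ge0.
Qed.

Lemma max_modulus_le_annulus a t A (b : nat -> R) k X x : coef_bounded a A ->
  (forall j z, Cnorm z <= 1 -> Cnorm (block a t j z) <= b j) ->
  (forall J, rsum (fun j => b j * radius_weight k j) J <= X) ->
  0 <= x <= annulus_edge (S k) -> max_modulus a t x <= X.
Proof.
  intros HA Hb HX Hx. pose proof (annulus_edge_bounds (S k)).
  apply (max_modulus_le a t A x); auto; [lra|]. intros z w Hz Hw.
  (* Along the partial sums that end at block boundaries. *)
  apply (Csum_to_le_subseq (fderiv_term a t z) w X (fun J => 2 ^ S J - 2)%nat).
  - intros n. pose proof (pow2_ge1 n). simpl. lia.
  - auto.
  - intros J. replace (S (2 ^ S J - 2)) with (2 ^ S J - 1)%nat by (pose proof (pow2_ge1 J); simpl; lia).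
    eapply Rle_trans; [apply (fderiv_partial_le a t b (annulus_edge (S k))); auto; lra|].
    apply HX.
Qed.

Lemma weight_le_annulus k x : annulus_edge k <= x <= annulus_edge (S k) ->
  0 <= 1 - x <= (/ 2) ^ k /\ 0 <= ln (1 / (1 - x)) <= INR k + 1.
Proof.
  intros Hx. pose proof (annulus_edge_bounds k). pose proof (annulus_edge_bounds (S k)).
  unfold annulus_edge in *.
  assert (Hh : 0 < (/ 2) ^ S k) by (apply pow_lt; lra).
  split; [lra|split].
  - apply ln_ge0. apply Rmult_le_reg_r with (1 - x); [lra|]. field_simplify; lra.
  - apply Rle_trans with (ln (2 ^ S k)).
    + apply ln_le_mono; [apply Rdiv_lt_0_compat; lra|].
      assert (/ 2 ^ S k <= 1 - x) by (rewrite <- pow_inv; lra).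
      apply Rmult_le_reg_r with (1 - x); [lra|].
      replace (1 / (1 - x) * (1 - x)) with 1 by (field; lra).
      apply Rmult_le_reg_l with (/ 2 ^ S k); [apply Rinv_0_lt_compat, pow2_pos|].
      rewrite <- Rmult_assoc, Rinv_l, Rmult_1_l, Rmult_1_r by (apply pow_nonzero; lra). lra.
    + rewrite ln_pow by lra. rewrite S_INR. pose proof ln_2_le_1. pose proof (pos_INR k). nra.
Qed.

Lemma finite_integral_of_block_majorant a t A (b : nat -> R) B : coef_bounded a A ->
  (forall j, 0 <= b j) ->
  (forall J, rsum (fun j => b j ^ 2 * (/ 4) ^ j * (INR j + 1) ^ 2) J <= B) ->
  (forall j z, Cnorm z <= 1 -> Cnorm (block a t j z) <= b j) ->
  finite_weighted_integral a t.
Proof.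
  intros HA Hb0 HB Hb.
  destruct (annulus_majorant_ex b B Hb0 HB) as [X [HX HXsum]].
  exists (max_modulus_abs a t). split.
  { intros r Hr. unfold max_modulus_abs. rewrite Rabs_pos_eq by lra.
    apply (max_modulus_is_lub a t A); auto. }
  exists (5000 * B). intros s Hs. exists (integrand_integrable a t A s HA Hs).
  destruct (annulus_edge_reach s Hs) as [K HK].
  set (c := fun k => (/ 2) ^ k * (INR k + 1) ^ 2 * X k ^ 2).
  apply Rle_trans with (rsum (fun k => c k * (/ 2) ^ S k) K).
  - apply RiemannInt_le_annuli; [| |lra].
    + intros x Hx. apply Rmult_le_pos; [apply Rmult_le_pos; [lra|apply pow2_ge_0]|apply pow2_ge_0].
    + intros k x Hx. pose proof (annulus_edge_bounds k). pose proof (annulus_edge_bounds (S k)).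
      destruct (weight_le_annulus k x Hx) as [Hw1 Hw2].
      unfold max_modulus_abs, c. rewrite Rabs_pos_eq by lra.
      assert (HM0 : 0 <= max_modulus a t x) by (apply (max_modulus_ge0 a t A); auto; lra).
      assert (HM1 : max_modulus a t x <= X k)
        by (apply (max_modulus_le_annulus a t A b k); auto; lra).
      assert (ln (1 / (1 - x)) ^ 2 <= (INR k + 1) ^ 2) by (apply pow_incr; lra).
      assert (max_modulus a t x ^ 2 <= X k ^ 2) by (apply pow_incr; lra).
      apply Rmult_le_compat; try apply pow2_ge_0; auto.
      * apply Rmult_le_pos; [lra|apply pow2_ge_0].
      * apply Rmult_le_compat; auto; try lra; apply pow2_ge_0.
  - eapply Rle_trans; [|apply (HXsum K)]. right. apply rsum_ext. intros k _. unfold c, annulus_weight.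
    replace (2 * k + 1)%nat with (k + S k)%nat by lia. rewrite pow_add. ring.
Qed.

Definition log_cube_term (a : nat -> Cx) (k : nat) : R := Cnorm (a (S k)) ^ 2 * ln (INR (S k)) ^ 3.

Lemma log_cube_term_ge0 a k : 0 <= log_cube_term a k.
Proof.
  unfold log_cube_term. apply Rmult_le_pos; [apply pow2_ge_0|].
  apply pow_le, ln_ge0. rewrite S_INR; pose proof (pos_INR k); lra.
Qed.

Lemma rsum_log_cube_le a l : Un_cv (fun N => sum_f_R0 (log_cube_term a) N) l ->
  forall n, rsum (log_cube_term a) n <= l.
Proof.
  intros H n. assert (Hg : forall N, sum_f_R0 (log_cube_term a) N <= l).
  { intros N. apply (growing_ineq (fun N => sum_f_R0 (log_cube_term a) N)); auto.
    intros M. simpl. pose proof (log_cube_term_ge0 a (S M)). lra. }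
  destruct n; [|rewrite <- sum_f_R0_rsum; auto].
  specialize (Hg 0%nat). simpl in Hg. pose proof (log_cube_term_ge0 a 0). simpl; lra.
Qed.

Lemma coef_bounded_of_log_cube a l : Un_cv (fun N => sum_f_R0 (log_cube_term a) N) l ->
  exists A, coef_bounded a A.
Proof.
  intros H. pose proof (rsum_log_cube_le a l H) as Hp.
  exists (sqrt (Rabs l) + Cnorm (a 1%nat) + Cnorm (a 2%nat)). intros n Hn.
  pose proof (sqrt_pos (Rabs l)). pose proof (Cnorm_ge0 (a 1%nat)). pose proof (Cnorm_ge0 (a 2%nat)).
  destruct n as [|[|[|n]]]; [lia|lra|lra|].
  assert (Hl : 1 <= ln (INR (S (S (S n))))).
  { rewrite <- (ln_exp 1). apply ln_le_mono; [apply exp_pos|].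
    rewrite !S_INR. pose proof exp_le_3. pose proof (pos_INR n). lra. }
  assert (Hu : log_cube_term a (S (S n)) <= l).
  { eapply Rle_trans; [|apply (Hp (S (S (S n))))]. apply rsum_term_le; [apply log_cube_term_ge0|lia]. }
  unfold log_cube_term in Hu.
  assert (1 <= ln (INR (S (S (S n)))) ^ 3) by (rewrite <- (pow1 3); apply pow_incr; lra).
  assert (Cnorm (a (S (S (S n)))) ^ 2 <= Rabs l).
  { pose proof (pow2_ge_0 (Cnorm (a (S (S (S n)))))). pose proof (Rle_abs l). nra. }
  assert (Cnorm (a (S (S (S n)))) <= sqrt (Rabs l)).
  { rewrite <- (sqrt_pow2 (Cnorm _)) by apply Cnorm_ge0. apply sqrt_le_1_alt; auto. }
  lra.
Qed.

(* On block [j + 1] we have [n < 2^(j+2)] and [ln n >= (j + 1) / 2]. *)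
Lemma block_energy_term_le a j i : (i < 2 ^ j)%nat ->
  INR j ^ 3 * (/ 4) ^ j * (INR (2 ^ j + i) * Cnorm (a (2 ^ j + i)%nat)) ^ 2
  <= 32 * log_cube_term a (2 ^ j - 1 + i).
Proof.
  intros Hi. destruct j as [|j].
  { replace (INR 0 ^ 3) with 0 by (simpl; ring). pose proof (log_cube_term_ge0 a (2 ^ 0 - 1 + i)). lra. }
  set (n := (2 ^ S j + i)%nat). pose proof (pow2_ge1 (S j)).
  unfold log_cube_term. replace (S (2 ^ S j - 1 + i)) with n by (unfold n; lia).
  assert (Hn1 : 2 ^ S j <= INR n) by (unfold n; rewrite <- INR_pow2; apply le_INR; lia).
  assert (Hn2 : INR n <= 2 * 2 ^ S j).
  { unfold n. rewrite plus_INR, INR_pow2.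
    assert (INR i <= 2 ^ S j) by (rewrite <- INR_pow2; apply le_INR; lia). lra. }
  assert (Hln : INR (S j) / 2 <= ln (INR n)).
  { apply Rle_trans with (ln (2 ^ S j)).
    - rewrite ln_pow by lra. pose proof ln_lt_2. pose proof (pos_INR (S j)). nra.
    - apply ln_le_mono; auto. apply pow2_pos. }
  assert (Hj3 : INR (S j) ^ 3 <= 8 * ln (INR n) ^ 3).
  { replace (8 * ln (INR n) ^ 3) with ((2 * ln (INR n)) ^ 3) by ring.
    apply pow_incr. pose proof (pos_INR (S j)). lra. }
  assert (Hn4 : (/ 4) ^ S j * INR n ^ 2 <= 4).
  { assert (INR n ^ 2 <= 4 * 4 ^ S j).
    { replace (4 * 4 ^ S j) with ((2 * 2 ^ S j) ^ 2)
        by (replace (4 ^ S j) with (2 ^ S j * 2 ^ S j)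
              by (rewrite <- Rpow_mult_distr; f_equal; lra); ring).
      apply pow_incr; split; auto. pose proof (pos_INR n); lra. }
    rewrite pow_inv. apply Rmult_le_reg_l with (4 ^ S j); [apply pow_lt; lra|].
    rewrite <- Rmult_assoc, Rinv_r, Rmult_1_l by (apply pow_nonzero; lra). lra. }
  assert (0 <= ln (INR n) ^ 3)
    by (apply pow_le, ln_ge0; apply Rle_trans with (2 ^ S j); auto; apply pow_R1_Rle; lra).
  rewrite Rpow_mult_distr. pose proof (pow2_ge_0 (Cnorm (a n))). pose proof (pow2_ge_0 (INR n)).
  pose proof (pow_le (/ 4) (S j) ltac:(lra)). pose proof (pow_le (INR (S j)) 3 (pos_INR _)).
  apply Rle_trans with ((8 * ln (INR n) ^ 3) * ((/ 4) ^ S j * INR n ^ 2) * Cnorm (a n) ^ 2).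
  - replace (INR (S j) ^ 3 * (/ 4) ^ S j * (INR n ^ 2 * Cnorm (a n) ^ 2))
      with (INR (S j) ^ 3 * ((/ 4) ^ S j * INR n ^ 2) * Cnorm (a n) ^ 2) by ring.
    apply Rmult_le_compat_r; auto. apply Rmult_le_compat_r; auto. apply Rmult_le_pos; auto.
  - assert (8 * ln (INR n) ^ 3 * ((/ 4) ^ S j * INR n ^ 2) <= 8 * ln (INR n) ^ 3 * 4)
      by (apply Rmult_le_compat_l; lra).
    nra.
Qed.

Lemma rsum_block_energy_le a l : Un_cv (fun N => sum_f_R0 (log_cube_term a) N) l ->
  forall J, rsum (fun j => INR j ^ 3 * (/ 4) ^ j * block_energy a j) J <= 32 * l.
Proof.
  intros H J. pose proof (rsum_log_cube_le a l H (2 ^ J - 1)) as Hp. rewrite rsum_blocks in Hp.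
  apply Rle_trans with (rsum (fun j => 32 * rsum (fun i => log_cube_term a (2 ^ j - 1 + i)%nat) (2 ^ j)) J).
  - apply rsum_le. intros j _. unfold block_energy. rewrite <- !rsum_scal.
    apply rsum_le. intros i Hi. apply block_energy_term_le; auto.
  - rewrite rsum_scal. lra.
Qed.

Lemma block_bound_sq_weight_le a j : (1 <= j)%nat ->
  block_bound a j ^ 2 * (/ 4) ^ j * (INR j + 1) ^ 2
  <= 288 * (INR j ^ 3 * (/ 4) ^ j * block_energy a j + (/ 2) ^ j).
Proof.
  intros Hj. pose proof (block_bound_sq_le a j Hj). assert (Hj1 : 1 <= INR j) by (apply (le_INR 1); lia).
  assert (Hq : (INR j + 1) ^ 2 <= 4 * INR j ^ 2) by (simpl; nra).
  pose proof (pow_le (/ 4) j ltac:(lra)). pose proof (pow2_ge_0 (block_bound a j)). pose proof (block_var_pos a j).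
  apply Rle_trans with (72 * INR j * block_var a j * (/ 4) ^ j * (4 * INR j ^ 2)).
  { apply Rmult_le_compat; try apply pow2_ge_0; try (apply Rmult_le_pos; auto); auto.
    apply Rmult_le_compat_r; auto. }
  unfold block_var.
  replace (72 * INR j * (block_energy a j + (/ 4) ^ j) * (/ 4) ^ j * (4 * INR j ^ 2))
    with (288 * (INR j ^ 3 * (/ 4) ^ j * block_energy a j + INR j ^ 3 * ((/ 4) ^ j * (/ 4) ^ j))) by ring.
  apply Rmult_le_compat_l; [lra|]. apply Rplus_le_compat_l.
  replace ((/ 4) ^ j * (/ 4) ^ j) with ((/ 8) ^ j * (/ 2) ^ j) by (rewrite <- !Rpow_mult_distr; f_equal; field).
  pose proof (INR_cube_le_pow8 j). pose proof (pow_le (/ 2) j ltac:(lra)).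
  rewrite <- Rmult_assoc. rewrite <- (Rmult_1_l ((/ 2) ^ j)) at 2. apply Rmult_le_compat_r; auto.
  rewrite pow_inv. apply Rmult_le_reg_r with (8 ^ j); [apply pow_lt; lra|].
  rewrite Rmult_assoc, Rinv_l, Rmult_1_r, Rmult_1_l by (apply pow_nonzero; lra). auto.
Qed.

Definition block_majorant (a : nat -> Cx) (A : R) (J0 j : nat) : R :=
  if Nat.ltb j J0 then 2 ^ j * (2 ^ S j * A) else block_bound a j.

Lemma block_majorant_ge0 a A J0 j : 0 <= A -> 0 <= block_majorant a A J0 j.
Proof.
  intros. unfold block_majorant. destruct Nat.ltb; [|apply block_bound_ge0].
  pose proof (pow2_pos j). pose proof (pow2_pos (S j)). apply Rmult_le_pos; [lra|]. apply Rmult_le_pos; lra.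
Qed.

Lemma rsum_block_majorant_le a A l J0 : Un_cv (fun N => sum_f_R0 (log_cube_term a) N) l ->
  (1 <= J0)%nat -> forall J,
  rsum (fun j => block_majorant a A J0 j ^ 2 * (/ 4) ^ j * (INR j + 1) ^ 2) J
  <= rsum (fun j => (2 ^ j * (2 ^ S j * A)) ^ 2 * (/ 4) ^ j * (INR j + 1) ^ 2) J0 + 288 * (32 * l + 2).
Proof.
  intros Hl HJ0 J. set (crude := fun j => (2 ^ j * (2 ^ S j * A)) ^ 2 * (/ 4) ^ j * (INR j + 1) ^ 2).
  assert (Hcrude : forall j, 0 <= crude j).
  { intros j. unfold crude. apply Rmult_le_pos; [|apply pow2_ge_0].
    apply Rmult_le_pos; [apply pow2_ge_0|apply pow_le; lra]. }
  apply Rle_trans with (rsum (fun j => (if Nat.ltb j J0 then crude j else 0) +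
                                      288 * (INR j ^ 3 * (/ 4) ^ j * block_energy a j + (/ 2) ^ j)) J).
  - apply rsum_le. intros j _. unfold block_majorant.
    assert (0 <= INR j ^ 3 * (/ 4) ^ j * block_energy a j + (/ 2) ^ j).
    { unfold block_energy. apply Rplus_le_le_0_compat; [|apply pow_le; lra].
      apply Rmult_le_pos; [apply Rmult_le_pos; apply pow_le; [apply pos_INR|lra]|].
      apply rsum_nonneg; intros; apply pow2_ge_0. }
    destruct (Nat.ltb_spec j J0); [unfold crude; lra|].
    rewrite Rplus_0_l. apply block_bound_sq_weight_le. lia.
  - rewrite rsum_plus, rsum_scal, rsum_plus, rsum_geom_half.
    pose proof (rsum_prefix_le crude J0 J Hcrude). pose proof (rsum_block_energy_le a l Hl J).
    pose proof (pow_lt (/ 2) J ltac:(lra)). lra.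
Qed.

Lemma finite_integral_of_block_bounds a l A t J0 :
  Un_cv (fun N => sum_f_R0 (log_cube_term a) N) l -> coef_bounded a A -> (1 <= J0)%nat ->
  (forall j, (J0 <= j)%nat -> forall z, Cnorm z <= 1 -> Cnorm (block a t j z) <= block_bound a j) ->
  finite_weighted_integral a t.
Proof.
  intros Hl HA HJ0 Hgood. pose proof (coef_bounded_ge0 a A HA).
  apply (finite_integral_of_block_majorant a t A (block_majorant a A J0)
           (rsum (fun j => (2 ^ j * (2 ^ S j * A)) ^ 2 * (/ 4) ^ j * (INR j + 1) ^ 2) J0
            + 288 * (32 * l + 2)) HA).
  - intros j. apply block_majorant_ge0; auto.
  - apply rsum_block_majorant_le; auto.
  - intros j z Hz. unfold block_majorant. destruct (Nat.ltb_spec j J0).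
    + apply block_le_crude; auto.
    + apply Hgood; auto.
Qed.

(** * The exceptional set *)

(* Interval number [n = 2^s - 1 + i], [i < 2^s], is the dyadic interval [(i/2^s, (i+1)/2^s)].
   It is kept in the cover for [J] iff [s = 2^(j+1)] with [j >= J] and [i] is a bad pattern
   for block [j]; otherwise it is made empty. *)
Definition stage (n : nat) : nat := Nat.log2 (S n).
Definition stage_index (n : nat) : nat := (S n - 2 ^ stage n)%nat.
Definition stage_level (s : nat) : nat := (Nat.log2 s - 1)%nat.

Definition is_bad_interval (a : nat -> Cx) (J n : nat) : bool :=
  let j := stage_level (stage n) in
  Nat.eqb (2 ^ S j) (stage n) && Nat.leb J j &&
  (if Rle_dec (block_level a j) (grid_max a j (stage_index n)) then true else false).

Definition cover_lo (a : nat -> Cx) (J n : nat) : R :=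
  if is_bad_interval a J n then INR (stage_index n) / 2 ^ stage n else 0.
Definition cover_hi (a : nat -> Cx) (J n : nat) : R :=
  if is_bad_interval a J n then (INR (stage_index n) + 1) / 2 ^ stage n else 0.

Lemma stage_block s i : (i < 2 ^ s)%nat -> stage (2 ^ s - 1 + i) = s /\ stage_index (2 ^ s - 1 + i) = i.
Proof.
  intros Hi. pose proof (pow2_ge1 s). assert (E : S (2 ^ s - 1 + i) = (2 ^ s + i)%nat) by lia.
  assert (Hs : stage (2 ^ s - 1 + i) = s).
  { unfold stage. rewrite E. apply Nat.log2_unique; [lia|]. simpl. lia. }
  split; auto. unfold stage_index. rewrite Hs, E. lia.
Qed.

Lemma stage_level_pow j : stage_level (2 ^ S j) = j.
Proof. unfold stage_level. rewrite Nat.log2_pow2 by lia. lia. Qed.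

Lemma cover_len_eq a J n :
  cover_hi a J n - cover_lo a J n = if is_bad_interval a J n then / 2 ^ stage n else 0.
Proof. unfold cover_hi, cover_lo. destruct is_bad_interval; [field; apply pow_nonzero; lra|ring]. Qed.

Lemma cover_len_ge0 a J n : 0 <= cover_hi a J n - cover_lo a J n.
Proof. rewrite cover_len_eq. destruct is_bad_interval; [left; apply Rinv_0_lt_compat, pow2_pos|lra]. Qed.

Definition tele (s : nat) : R := 1 / (INR s - 1) - 1 / INR s.

Lemma tele_ge0 s : (2 <= s)%nat -> 0 <= tele s.
Proof.
  intros Hs. unfold tele. assert (2 <= INR s) by (apply (le_INR 2); lia).
  assert (1 / INR s <= 1 / (INR s - 1)) by (apply Rmult_le_compat_l; [lra|apply Rinv_le_contravar; lra]).
  lra.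
Qed.

Lemma rsum_tele s0 n : (2 <= s0)%nat ->
  rsum (fun i => tele (s0 + i)) n = 1 / (INR s0 - 1) - 1 / (INR (s0 + n) - 1).
Proof.
  intros Hs. assert (H2 : 2 <= INR s0) by (apply (le_INR 2); auto).
  induction n; [simpl; rewrite Nat.add_0_r; ring|]. cbn [rsum]. rewrite IHn. unfold tele.
  replace (s0 + S n)%nat with (S (s0 + n)) by lia. rewrite S_INR.
  assert (INR s0 <= INR (s0 + n)) by (apply le_INR; lia). field. lra.
Qed.

Lemma quarter_pow_le_tele j : 36 * (/ 4) ^ j <= 144 * tele (2 ^ S j).
Proof.
  unfold tele. rewrite INR_pow2. assert (Hq : 1 <= 2 ^ j) by (apply pow_R1_Rle; lra).
  replace ((/ 4) ^ j) with (/ (2 ^ j * 2 ^ j))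
    by (rewrite pow_inv; f_equal; rewrite <- Rpow_mult_distr; f_equal; lra).
  simpl pow. replace (1 / (2 * 2 ^ j - 1) - 1 / (2 * 2 ^ j)) with (/ ((2 * 2 ^ j - 1) * (2 * 2 ^ j)))
    by (field; lra).
  apply Rmult_le_reg_r with ((2 * 2 ^ j - 1) * (2 * 2 ^ j) * (2 ^ j * 2 ^ j)); [nra|].
  field_simplify; try lra; nra.
Qed.

(* The stage [s = 2^(j+1)] has total length at most [36 4^(-j) <= 144 (1/(s-1) - 1/s)];
   the latter telescopes over [s]. *)
Lemma rsum_cover_stage_le a J s : (1 <= J)%nat ->
  rsum (fun i => cover_hi a J (2 ^ s - 1 + i) - cover_lo a J (2 ^ s - 1 + i)) (2 ^ s)
  <= if Nat.ltb s (2 ^ S J) then 0 else 144 * tele s.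
Proof.
  intros HJ. assert (Hs0 : (2 <= 2 ^ S J)%nat) by (simpl; pose proof (pow2_ge1 J); lia).
  set (j := stage_level s).
  rewrite (rsum_ext _ (fun i => if (Nat.eqb (2 ^ S j) s && Nat.leb J j &&
       (if Rle_dec (block_level a j) (grid_max a j i) then true else false))%bool then / 2 ^ s else 0)).
  2:{ intros i Hi. rewrite cover_len_eq. destruct (stage_block s i Hi) as [E1 E2].
      unfold is_bad_interval. rewrite E1, E2. auto. }
  assert (Hrhs : 0 <= if Nat.ltb s (2 ^ S J) then 0 else 144 * tele s).
  { destruct (Nat.ltb_spec s (2 ^ S J)); [lra|]. pose proof (tele_ge0 s ltac:(lia)). lra. }
  destruct (Nat.eqb_spec (2 ^ S j) s) as [Es|Es]; destruct (Nat.leb_spec J j) as [Ej|Ej]; simpl andb;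
    try (rewrite rsum_zero; exact Hrhs).
  rewrite (rsum_ext _ (fun i => (if Rle_dec (block_level a j) (grid_max a j i) then 1 else 0) * / 2 ^ s))
    by (intros i _; destruct Rle_dec; ring).
  rewrite rsum_mult_r, <- Es.
  assert (Hsj : (2 ^ S j = 2 ^ j + 2 ^ j)%nat) by (simpl; lia).
  pose proof (count_grid_max_large a j ltac:(lia)). rewrite <- Hsj in H.
  assert (Hp := pow2_pos (2 ^ S j)).
  apply Rle_trans with (36 * (/ 4) ^ j).
  { apply Rmult_le_reg_r with (2 ^ (2 ^ S j)); auto. rewrite Rmult_assoc, Rinv_l, Rmult_1_r by lra. lra. }
  destruct (Nat.ltb_spec (2 ^ S j) (2 ^ S J)) as [Hlt|].
  - exfalso. assert (2 ^ S J <= 2 ^ S j)%nat by (apply Nat.pow_le_mono_r; lia). lia.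
  - apply quarter_pow_le_tele.
Qed.

Lemma cover_total_len_le a J : (1 <= J)%nat -> forall N,
  sum_f_R0 (fun n => cover_hi a J n - cover_lo a J n) N <= 144 * / 2 ^ J.
Proof.
  intros HJ N. set (s0 := (2 ^ S J)%nat). assert (Hs0 : (2 <= s0)%nat) by (unfold s0; simpl; pose proof (pow2_ge1 J); lia).
  assert (H2 : 2 <= INR s0) by (apply (le_INR 2); auto).
  rewrite sum_f_R0_rsum. eapply Rle_trans.
  { apply (rsum_mono _ (S N) (2 ^ S N - 1)); [intros; apply cover_len_ge0|].
    pose proof (Nat.pow_gt_lin_r 2 (S N) ltac:(lia)). lia. }
  rewrite rsum_blocks. eapply Rle_trans; [apply rsum_le; intros s _; apply rsum_cover_stage_le; auto|].
  apply Rle_trans with (144 * / (INR s0 - 1)).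
  - eapply Rle_trans; [|apply (rsum_shifted_le (fun i => 144 * tele (s0 + i)) s0 (S N))].
    + right. apply rsum_ext. intros s _. unfold s0. destruct (Nat.ltb_spec s (2 ^ S J)); auto.
      do 2 f_equal. lia.
    + intros i. cbv beta. pose proof (tele_ge0 (s0 + i) ltac:(lia)). lra.
    + intros n. rewrite rsum_scal, rsum_tele by auto.
      assert (INR s0 <= INR (s0 + n)) by (apply le_INR; lia).
      assert (0 <= 1 / (INR (s0 + n) - 1)) by (apply Rmult_le_pos; [lra|left; apply Rinv_0_lt_compat; lra]).
      unfold Rdiv. lra.
  - unfold s0. rewrite INR_pow2. assert (Hq : 1 <= 2 ^ J) by (apply pow_R1_Rle; lra).
    replace (2 ^ S J) with (2 * 2 ^ J) by (simpl; ring).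
    apply Rmult_le_compat_l; [lra|]. apply Rinv_le_contravar; lra.
Qed.

Lemma finite_integral_dyadic a l A t : Un_cv (fun N => sum_f_R0 (log_cube_term a) N) l ->
  coef_bounded a A -> dyadic t -> finite_weighted_integral a t.
Proof.
  intros Hl HA [p [k Hk]]. apply (finite_integral_of_block_bounds a l A t (S p)); auto; [lia|].
  intros j Hj z Hz. rewrite (block_dyadic_0 a t p k j z Hk Hj). apply block_bound_ge0.
Qed.

Lemma bad_block_of_infinite a l A t J : Un_cv (fun N => sum_f_R0 (log_cube_term a) N) l ->
  coef_bounded a A -> (1 <= J)%nat -> ~ finite_weighted_integral a t ->
  exists j, (J <= j)%nat /\ exists z, Cnorm z <= 1 /\ block_bound a j < Cnorm (block a t j z).
Proof.
  intros Hl HA HJ Hnf. apply NNPP. intros Hgood. apply Hnf.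
  apply (finite_integral_of_block_bounds a l A t J); auto. intros j Hj z Hz.
  apply Rnot_lt_le. intros Hlt. apply Hgood. exists j; split; auto; exists z; auto.
Qed.

Lemma infinite_in_cover a l A t J : Un_cv (fun N => sum_f_R0 (log_cube_term a) N) l ->
  coef_bounded a A -> (1 <= J)%nat -> 0 <= t <= 1 -> ~ finite_weighted_integral a t ->
  exists n, cover_lo a J n < t < cover_hi a J n.
Proof.
  intros Hl HA HJ Ht Hnf.
  assert (Hnd : ~ dyadic t) by (intros Hd; apply Hnf; apply (finite_integral_dyadic a l A); auto).
  destruct (bad_block_of_infinite a l A t J Hl HA HJ Hnf) as [j [Hj [z [Hz Hzb]]]].
  destruct (nondyadic_in_dyadic_interval t (2 ^ S j) Ht Hnd) as [k [Hk Htk]].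
  destruct (Rlt_le_dec (grid_max a j k) (block_level a j)) as [Hg|Hg].
  { pose proof (block_le_bound a t j k ltac:(lia) Htk Hg z Hz). lra. }
  exists (2 ^ (2 ^ S j) - 1 + k)%nat. destruct (stage_block (2 ^ S j) k Hk) as [E1 E2].
  assert (Hsel : is_bad_interval a J (2 ^ (2 ^ S j) - 1 + k) = true).
  { unfold is_bad_interval. rewrite E1, E2, stage_level_pow, Nat.eqb_refl.
    destruct (Nat.leb_spec J j); [|lia].
    destruct (Rle_dec (block_level a j) (grid_max a j k)); [reflexivity|lra]. }
  unfold cover_lo, cover_hi. rewrite Hsel, E1, E2. auto.
Qed.

Theorem mainTheorem12 (a : nat -> Cx) :
  (exists l : R,
     Un_cv (fun N => sum_f_R0
              (fun k => Cnorm (a (S k)) ^ 2 * (ln (INR (S k))) ^ 3) N) l) ->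
  null_set (fun t => 0 <= t <= 1 /\ ~ finite_weighted_integral a t).
Proof.
  intros [l Hl] eps Heps.
  destruct (coef_bounded_of_log_cube a l Hl) as [A HA].
  destruct (pow_lt_1_zero (/ 2) ltac:(rewrite Rabs_pos_eq; lra) (eps / 144) ltac:(lra)) as [J HJ].
  specialize (HJ (S J) ltac:(lia)). rewrite Rabs_pos_eq, pow_inv in HJ by (apply pow_le; lra).
  exists (cover_lo a (S J)), (cover_hi a (S J)). split; [|split].
  - intros n. pose proof (cover_len_ge0 a (S J) n). lra.
  - intros t [Ht Hnf]. apply (infinite_in_cover a l A t (S J)); auto. lia.
  - intros N. pose proof (cover_total_len_le a (S J) ltac:(lia) N). lra.
Qed.
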